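(* Let $X$ be a complex Banach space and let $a,b\in\mathcal{L}(X)$ both have g-Drazin inverses. If $aba=0$, $bab=0$, $a^2b^2=0$ and $ab^3=0$, then $a+b$ has a g-Drazin inverse.
   Context: $\mathcal{L}(X)$ denotes the Banach algebra of bounded linear operators on the complex Banach space $X$. An element $a$ of a unital Banach algebra $\mathcal{A}$ is quasinilpotent if $\lim_{n\to\infty}\|a^n\|^{1/n}=0$. An element $a\in\mathcal{A}$ has a g-Drazin (generalized Drazin) inverse if there exists $x\in\mathcal{A}$ with $x=xax$, $ax=xa$, and $a-a^2x$ quasinilpotent; such $x$ is unique and is denoted $a^d$. *)

From Stdlib Require Import Reals.
Open Scope R_scope.

Record Cpx := mkC { Cre : R; Cim : R }.
Definition C0 : Cpx := mkC 0 0.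
Definition C1 : Cpx := mkC 1 0.
Definition Cadd (z w : Cpx) : Cpx := mkC (Cre z + Cre w) (Cim z + Cim w).
Definition Cmul (z w : Cpx) : Cpx :=
  mkC (Cre z * Cre w - Cim z * Cim w) (Cre z * Cim w + Cim z * Cre w).
Definition Cmod (z : Cpx) : R := sqrt (Cre z ^ 2 + Cim z ^ 2).

Record CBanach := {
  vec :> Type;
  vzero : vec;
  vadd : vec -> vec -> vec;
  vopp : vec -> vec;
  vscal : Cpx -> vec -> vec;
  vnorm : vec -> R;
  vadd_assoc : forall x y z, vadd x (vadd y z) = vadd (vadd x y) z;
  vadd_comm : forall x y, vadd x y = vadd y x;
  vadd_0 : forall x, vadd x vzero = x;
  vadd_opp : forall x, vadd x (vopp x) = vzero;
  vscal_1 : forall x, vscal C1 x = x;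
  vscal_mul : forall c d x, vscal c (vscal d x) = vscal (Cmul c d) x;
  vscal_addv : forall c x y, vscal c (vadd x y) = vadd (vscal c x) (vscal c y);
  vscal_adds : forall c d x, vscal (Cadd c d) x = vadd (vscal c x) (vscal d x);
  vnorm_nonneg : forall x, 0 <= vnorm x;
  vnorm_eq0 : forall x, vnorm x = 0 -> x = vzero;
  vnorm_triangle : forall x y, vnorm (vadd x y) <= vnorm x + vnorm y;
  vnorm_scal : forall c x, vnorm (vscal c x) = Cmod c * vnorm x;
  vcomplete : forall u : nat -> vec,
    (forall eps, 0 < eps -> exists N, forall m n, (m >= N)%nat -> (n >= N)%nat ->
        vnorm (vadd (u m) (vopp (u n))) < eps) ->
    exists l, forall eps, 0 < eps -> exists N, forall n, (n >= N)%nat ->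
        vnorm (vadd (u n) (vopp l)) < eps
}.

Arguments vzero {_}. Arguments vadd {_}. Arguments vopp {_}.
Arguments vscal {_}. Arguments vnorm {_}.

Section Ops.
Variable X : CBanach.

Definition bounded_linear (T : X -> X) : Prop :=
  (forall x y, T (vadd x y) = vadd (T x) (T y)) /\
  (forall c x, T (vscal c x) = vscal c (T x)) /\
  (exists M, forall x, vnorm (T x) <= M * vnorm x).

Definition opmul (S T : X -> X) : X -> X := fun x => S (T x).
Definition opadd (S T : X -> X) : X -> X := fun x => vadd (S x) (T x).
Definition opsub (S T : X -> X) : X -> X := fun x => vadd (S x) (vopp (T x)).
Fixpoint oppow (T : X -> X) (n : nat) : X -> X :=
  match n with O => fun x => x | S k => opmul T (oppow T k) end.

Definition is_opnorm (T : X -> X) (m : R) : Prop :=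
  is_lub (fun r => exists x, vnorm x <= 1 /\ r = vnorm (T x)) m.

(** n-th root of a nonnegative real (with root of 0 equal to 0). *)
Definition nroot (n : nat) (r : R) : R :=
  if Rlt_dec 0 r then Rpower r (/ INR n) else 0.

Definition quasinilpotent (T : X -> X) : Prop :=
  exists u : nat -> R, (forall n, is_opnorm (oppow T n) (u n)) /\
    Un_cv (fun n => nroot n (u n)) 0.

Definition has_gDrazin (T : X -> X) : Prop :=
  exists S, bounded_linear S /\
    opmul S (opmul T S) = S /\
    opmul T S = opmul S T /\
    quasinilpotent (opsub T (opmul (opmul T T) S)).

End Ops.

(* Put c = a + b.  The four relations reduce c^3 to
     a (a^2 + ab + b^2) + (b a^2 + b^2 a) + b^3,
   and g-Drazin invertibility is carried through this sum by three perturbation results, each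
   with an explicit series for the inverse: P + N with N quasinilpotent and PN = 0, P + Y with Y
   group invertible and PY = 0, and hence P + Q whenever PQ = 0 (Djordjevic-Wei).  Concretely,
   a^3 + b^2 a = (a^2 + ab + b^2) a is g-Drazin invertible because b^2 a squares to zero and
   a^3 b^2 a = 0; Cline's formula transfers this to a (a^2 + ab + b^2); adding the square-zero
   b a^2 + b^2 a, and then b^3, gives c^3.  Finally a g-Drazin inverse w of c^3 commutes with c,
   and c^2 w is a g-Drazin inverse of c. *)

From Pilot Require Import Defs.
From Stdlib Require Import Reals Lra Lia List FunctionalExtensionality IndefiniteDescription.
Open Scope R_scope.

Arguments vadd_assoc {_}. Arguments vadd_comm {_}. Arguments vadd_0 {_}.
Arguments vadd_opp {_}. Arguments vscal_1 {_}. Arguments vscal_adds {_}.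
Arguments vscal_addv {_}. Arguments vnorm_nonneg {_}. Arguments vnorm_eq0 {_}.
Arguments vnorm_triangle {_}. Arguments vnorm_scal {_}. Arguments vcomplete {_}.

Section NormedSpace.
Context {X : CBanach}.

Lemma vadd_0l (x : X) : vadd vzero x = x.
Proof. rewrite vadd_comm; apply vadd_0. Qed.

Lemma vadd_oppl (x : X) : vadd (vopp x) x = vzero.
Proof. rewrite vadd_comm; apply vadd_opp. Qed.

Lemma vadd_cancel_l (a x y : X) : vadd a x = vadd a y -> x = y.
Proof.
  intro H. rewrite <- (vadd_0l x), <- (vadd_0l y), <- (vadd_oppl a).
  rewrite <- !vadd_assoc, H; reflexivity.
Qed.

Lemma vopp_unique (x y : X) : vadd x y = vzero -> y = vopp x.
Proof. intro H. apply (vadd_cancel_l x). rewrite H, vadd_opp; reflexivity. Qed.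

Lemma vopp_vopp (x : X) : vopp (vopp x) = x.
Proof. symmetry; apply vopp_unique, vadd_oppl. Qed.

Lemma vopp_zero : vopp (@vzero X) = vzero.
Proof. symmetry; apply vopp_unique, vadd_0. Qed.

Lemma vadd_ACA (a b c d : X) : vadd (vadd a b) (vadd c d) = vadd (vadd a c) (vadd b d).
Proof. rewrite !vadd_assoc. f_equal. rewrite <- !vadd_assoc. f_equal. apply vadd_comm. Qed.

Lemma vopp_vadd (x y : X) : vopp (vadd x y) = vadd (vopp x) (vopp y).
Proof. symmetry; apply vopp_unique. rewrite vadd_ACA, !vadd_opp; apply vadd_0. Qed.

Lemma vsub_eq0 (x y : X) : vadd x (vopp y) = vzero -> x = y.
Proof. intro H. rewrite <- (vopp_vopp y). apply vopp_unique. rewrite vadd_comm; exact H. Qed.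

Lemma vscal_zero c : vscal c (@vzero X) = vzero.
Proof. apply (vadd_cancel_l (vscal c vzero)). rewrite <- vscal_addv, !vadd_0; reflexivity. Qed.

Lemma vscal_opp c (v : X) : vscal c (vopp v) = vopp (vscal c v).
Proof. apply vopp_unique. rewrite <- vscal_addv, vadd_opp. apply vscal_zero. Qed.

Lemma vscal_C0 (x : X) : vscal Defs.C0 x = vzero.
Proof.
  apply (vadd_cancel_l (vscal Defs.C0 x)). rewrite <- vscal_adds, vadd_0.
  f_equal. unfold Cadd, Defs.C0; cbn. f_equal; ring.
Qed.

Lemma Cmod_real (r : R) : Cmod (mkC r 0) = Rabs r.
Proof.
  unfold Cmod; cbn [Cre Cim]. replace (r ^ 2 + 0 ^ 2) with (Rsqr r) by (unfold Rsqr; ring).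
  apply sqrt_Rsqr_abs.
Qed.

Lemma vopp_scal (x : X) : vopp x = vscal (mkC (-1) 0) x.
Proof.
  symmetry; apply vopp_unique. rewrite <- (vscal_1 x) at 1. rewrite <- vscal_adds.
  replace (Cadd Defs.C1 (mkC (-1) 0)) with Defs.C0 by (unfold Cadd, Defs.C0, Defs.C1; cbn; f_equal; ring).
  apply vscal_C0.
Qed.

Lemma vnorm_zero : vnorm (@vzero X) = 0.
Proof.
  rewrite <- (vscal_C0 vzero), vnorm_scal. unfold Defs.C0. rewrite Cmod_real, Rabs_R0; ring.
Qed.

Lemma vnorm_opp (x : X) : vnorm (vopp x) = vnorm x.
Proof. rewrite vopp_scal, vnorm_scal, Cmod_real, Rabs_left by lra; ring. Qed.

Lemma vnorm_sub_sym (x y : X) : vnorm (vadd x (vopp y)) = vnorm (vadd y (vopp x)).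
Proof. rewrite <- vnorm_opp, vopp_vadd, vopp_vopp, vadd_comm; reflexivity. Qed.

Lemma vnorm_sub_triangle (x y z : X) :
  vnorm (vadd x (vopp z)) <= vnorm (vadd x (vopp y)) + vnorm (vadd y (vopp z)).
Proof.
  replace (vadd x (vopp z)) with (vadd (vadd x (vopp y)) (vadd y (vopp z))).
  - apply vnorm_triangle.
  - rewrite <- vadd_assoc, (vadd_assoc (vopp y)), vadd_oppl, vadd_0l; reflexivity.
Qed.

Lemma vzero_of_norm_small (x : X) : (forall e, 0 < e -> vnorm x <= e) -> x = vzero.
Proof.
  intro H. apply vnorm_eq0. destruct (vnorm_nonneg x) as [Hx|Hx]; [|auto].
  specialize (H (vnorm x / 2)). lra.
Qed.

(** * A normaliser for abelian-group identities *)

Fixpoint vmuln (n : nat) (v : X) : X :=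
  match n with O => vzero | S k => vadd v (vmuln k v) end.

(* A pair [(p, q)] of naturals encodes the integer coefficient [p - q]. *)
Definition vcoef (pq : nat * nat) (v : X) : X := vadd (vmuln (fst pq) v) (vopp (vmuln (snd pq) v)).

Lemma vmulnD n m v : vmuln (n + m) v = vadd (vmuln n v) (vmuln m v).
Proof.
  induction n as [|n IH]; cbn; [rewrite vadd_0l; reflexivity|rewrite IH, vadd_assoc; reflexivity].
Qed.

Lemma vcoefD p q v : vcoef (fst p + fst q, snd p + snd q)%nat v = vadd (vcoef p v) (vcoef q v).
Proof. unfold vcoef; cbn. rewrite !vmulnD, vopp_vadd. apply vadd_ACA. Qed.

Lemma vcoefN p v : vcoef (snd p, fst p) v = vopp (vcoef p v).
Proof. unfold vcoef; cbn. rewrite vopp_vadd, vopp_vopp, vadd_comm; reflexivity. Qed.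

Lemma vcoef0 v : vcoef (0, 0)%nat v = vzero.
Proof. unfold vcoef; cbn. rewrite vopp_zero, vadd_0; reflexivity. Qed.

Lemma vcoef_reduce p q v : vcoef (p, q) v = vcoef (p - q, q - p)%nat v.
Proof.
  revert p; induction q as [|q IH]; intros [|p]; cbn; rewrite ?Nat.sub_0_r; try reflexivity.
  rewrite <- IH. unfold vcoef; cbn. rewrite vopp_vadd, vadd_ACA, vadd_opp, vadd_0l; reflexivity.
Qed.

Lemma vcoef_eq p q v : (fst p + snd q = fst q + snd p)%nat -> vcoef p v = vcoef q v.
Proof.
  destruct p as [a b], q as [c d]; cbn; intro H.
  rewrite vcoef_reduce, (vcoef_reduce c d).
  replace (a - b)%nat with (c - d)%nat by lia. replace (b - a)%nat with (d - c)%nat by lia.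
  reflexivity.
Qed.

Inductive vterm := VVar (n : nat) | VZero | VAdd (s t : vterm) | VOpp (t : vterm).

Fixpoint vterm_eval (env : list X) (t : vterm) : X :=
  match t with
  | VVar n => nth n env vzero
  | VZero => vzero
  | VAdd s t => vadd (vterm_eval env s) (vterm_eval env t)
  | VOpp t => vopp (vterm_eval env t)
  end.

(* A normal form lists the coefficient of each variable of the environment. *)
Fixpoint nf_eval (env : list X) (cs : list (nat * nat)) : X :=
  match cs with
  | nil => vzero
  | c :: cs' => vadd (vcoef c (hd vzero env)) (nf_eval (tl env) cs')
  end.

Fixpoint nf_add (l m : list (nat * nat)) : list (nat * nat) :=
  match l, m with
  | nil, _ => m
  | _, nil => l
  | x :: l', y :: m' => (fst x + fst y, snd x + snd y)%nat :: nf_add l' m'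
  end.

Definition coef_opp (p : nat * nat) : nat * nat := (snd p, fst p).

Fixpoint vterm_nf (t : vterm) : list (nat * nat) :=
  match t with
  | VVar k => repeat (0, 0)%nat k ++ (1, 0)%nat :: nil
  | VZero => nil
  | VAdd s t => nf_add (vterm_nf s) (vterm_nf t)
  | VOpp t => map coef_opp (vterm_nf t)
  end.

Lemma nf_eval_add env l m : nf_eval env (nf_add l m) = vadd (nf_eval env l) (nf_eval env m).
Proof.
  revert env m; induction l as [|x l IH]; intros env [|y m]; cbn;
    rewrite ?vadd_0l, ?vadd_0; try reflexivity.
  rewrite IH, vcoefD. apply vadd_ACA.
Qed.

Lemma nf_eval_opp env l : nf_eval env (map coef_opp l) = vopp (nf_eval env l).
Proof.
  revert env; induction l as [|x l IH]; intros env; cbn.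
  - rewrite vopp_zero; reflexivity.
  - rewrite IH, vopp_vadd, <- vcoefN; reflexivity.
Qed.

Lemma nf_eval_var env k : nf_eval env (repeat (0, 0)%nat k ++ (1, 0)%nat :: nil) = nth k env vzero.
Proof.
  revert env; induction k as [|k IH]; intros [|v env]; cbn.
  - unfold vcoef; cbn. rewrite vopp_zero, !vadd_0; reflexivity.
  - unfold vcoef; cbn. rewrite vopp_zero, !vadd_0; reflexivity.
  - rewrite vcoef0, vadd_0l, IH. destruct k; reflexivity.
  - rewrite vcoef0, vadd_0l, IH; reflexivity.
Qed.

Lemma vterm_nfE env t : vterm_eval env t = nf_eval env (vterm_nf t).
Proof.
  induction t; cbn.
  - rewrite nf_eval_var; reflexivity.
  - reflexivity.
  - rewrite nf_eval_add, IHt1, IHt2; reflexivity.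
  - rewrite nf_eval_opp, IHt; reflexivity.
Qed.

Fixpoint nf_zerob (l : list (nat * nat)) : bool :=
  match l with nil => true | x :: l' => Nat.eqb (fst x) (snd x) && nf_zerob l' end.

Fixpoint nf_eqb (l m : list (nat * nat)) : bool :=
  match l, m with
  | nil, _ => nf_zerob m
  | _, nil => nf_zerob l
  | x :: l', y :: m' => Nat.eqb (fst x + snd y) (fst y + snd x) && nf_eqb l' m'
  end.

Lemma nf_zerobP env l : nf_zerob l = true -> nf_eval env l = vzero.
Proof.
  revert env; induction l as [|x l IH]; intros env H; cbn in *; [reflexivity|].
  apply andb_prop in H as [H1 H2]. apply Nat.eqb_eq in H1.
  rewrite IH, (vcoef_eq x (0, 0)%nat), vcoef0, vadd_0 by (cbn; lia || assumption).
  reflexivity.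
Qed.

Lemma nf_eqbP env l m : nf_eqb l m = true -> nf_eval env l = nf_eval env m.
Proof.
  revert env m; induction l as [|x l IH]; intros env m H.
  - symmetry. apply nf_zerobP, H.
  - destruct m as [|y m].
    + apply nf_zerobP, H.
    + cbn in H |- *. apply andb_prop in H as [H1 H2]. apply Nat.eqb_eq in H1.
      rewrite (IH _ m H2), (vcoef_eq x y) by lia. reflexivity.
Qed.

Lemma vterm_eqP env s t :
  nf_eqb (vterm_nf s) (vterm_nf t) = true -> vterm_eval env s = vterm_eval env t.
Proof. intro H; rewrite !vterm_nfE; apply nf_eqbP, H. Qed.

End NormedSpace.

Ltac vlookup x l :=
  match l with
  | x :: _ => constr:(O)
  | _ :: ?l' => let n := vlookup x l' in constr:(S n)
  end.

Ltac vatoms t l :=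
  match t with
  | vadd ?a ?b => let l1 := vatoms a l in vatoms b l1
  | vopp ?a => vatoms a l
  | vzero => l
  | _ => match constr:(tt) with
         | _ => let n := vlookup t l in l
         | _ => constr:(app l (cons t nil))
         end
  end.

Ltac vreify t l :=
  match t with
  | vadd ?a ?b => let ea := vreify a l in let eb := vreify b l in constr:(VAdd ea eb)
  | vopp ?a => let ea := vreify a l in constr:(VOpp ea)
  | vzero => constr:(VZero)
  | _ => let n := vlookup t l in constr:(VVar n)
  end.

(* Proves an identity [u = v] between vectors that holds in every abelian group. *)
Ltac vgroup :=
  match goal with
  | |- @eq (vec ?X) ?u ?v =>
    let l1 := vatoms u (@nil (vec X)) in
    let l2 := vatoms v l1 in
    let l := eval cbv [app] in l2 in
    let eu := vreify u l in let ev := vreify v l in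
    change (@vterm_eval X l eu = @vterm_eval X l ev); apply vterm_eqP; vm_compute; reflexivity
  end.

Notation BL := (bounded_linear _).
Notation "A ** B" := (opmul _ A B) (at level 40, left associativity).
Notation "A +++ B" := (opadd _ A B) (at level 50, left associativity).
Notation "A --- B" := (opsub _ A B) (at level 50, left associativity).
Notation "T ^^ n" := (oppow _ T n) (at level 30).

Section Operators.
Context {X : CBanach}.
Implicit Types (S T A B : X -> X).

Definition op0 : X -> X := fun _ => vzero.
Definition op1 : X -> X := fun x => x.

Lemma opE {S T} : S = T -> forall x, S x = T x.
Proof. intros ->; reflexivity. Qed.

Lemma bl_add {T} : BL T -> forall u v, T (vadd u v) = vadd (T u) (T v).
Proof. intros [H _]; exact H. Qed.

Lemma bl_scal {T} : BL T -> forall c u, T (vscal c u) = vscal c (T u).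
Proof. intros [_ [H _]]; exact H. Qed.

Lemma bl_zero {T} : BL T -> T vzero = vzero.
Proof. intro H. apply (vadd_cancel_l (T vzero)). rewrite <- (bl_add H), !vadd_0; reflexivity. Qed.

Lemma bl_opp {T} : BL T -> forall u, T (vopp u) = vopp (T u).
Proof. intros H u. apply vopp_unique. rewrite <- (bl_add H), vadd_opp. apply bl_zero, H. Qed.

Lemma bl_bound {T} : BL T -> exists M, 0 <= M /\ forall x, vnorm (T x) <= M * vnorm x.
Proof.
  intros [_ [_ [M HM]]]. exists (Rmax M 0). split; [apply Rmax_r|].
  intro x. eapply Rle_trans; [apply HM|]. apply Rmult_le_compat_r; [apply vnorm_nonneg|apply Rmax_l].
Qed.

Lemma bl_op1 : BL op1.
Proof. split; [|split]; unfold op1; auto. exists 1; intros; lra. Qed.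

Lemma bl_op0 : BL op0.
Proof.
  split; [|split]; unfold op0; intros.
  - rewrite vadd_0; reflexivity.
  - symmetry; apply vscal_zero.
  - exists 0; intros. rewrite vnorm_zero; lra.
Qed.

Lemma bl_mul A B : BL A -> BL B -> BL (A ** B).
Proof.
  intros HA HB. unfold opmul. split; [|split].
  - intros; rewrite (bl_add HB), (bl_add HA); reflexivity.
  - intros; rewrite (bl_scal HB), (bl_scal HA); reflexivity.
  - destruct (bl_bound HA) as [M [HM0 HM]], (bl_bound HB) as [N [HN0 HN]].
    exists (M * N); intro x. eapply Rle_trans; [apply HM|].
    rewrite Rmult_assoc. apply Rmult_le_compat_l; auto.
Qed.

Lemma bl_add_op A B : BL A -> BL B -> BL (A +++ B).
Proof.
  intros HA HB. unfold opadd. split; [|split].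
  - intros; rewrite (bl_add HB), (bl_add HA). apply vadd_ACA.
  - intros; rewrite (bl_scal HB), (bl_scal HA), vscal_addv; reflexivity.
  - destruct (bl_bound HA) as [M [HM0 HM]], (bl_bound HB) as [N [HN0 HN]].
    exists (M + N); intro x. eapply Rle_trans; [apply vnorm_triangle|].
    specialize (HM x); specialize (HN x); lra.
Qed.

Lemma bl_sub_op A B : BL A -> BL B -> BL (A --- B).
Proof.
  intros HA HB. unfold opsub. split; [|split].
  - intros; rewrite (bl_add HB), (bl_add HA), vopp_vadd. apply vadd_ACA.
  - intros; rewrite (bl_scal HB), (bl_scal HA), vscal_addv, vscal_opp; reflexivity.
  - destruct (bl_bound HA) as [M [HM0 HM]], (bl_bound HB) as [N [HN0 HN]].
    exists (M + N); intro x. eapply Rle_trans; [apply vnorm_triangle|].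
    rewrite vnorm_opp. specialize (HM x); specialize (HN x); lra.
Qed.

Lemma bl_pow T n : BL T -> BL (T ^^ n).
Proof. intro H. induction n; cbn; [apply bl_op1|apply bl_mul; auto]. Qed.

Lemma oppowD T n m : T ^^ (n + m) = T ^^ n ** T ^^ m.
Proof. induction n as [|n IH]; cbn; [reflexivity|rewrite IH; reflexivity]. Qed.

Lemma oppowSr T n : T ^^ S n = T ^^ n ** T.
Proof. rewrite <- Nat.add_1_r, oppowD; reflexivity. Qed.

Lemma oppowM T n m : T ^^ (n * m) = (T ^^ n) ^^ m.
Proof.
  induction m as [|m IH]; [rewrite Nat.mul_0_r; reflexivity|].
  replace (n * S m)%nat with (n + n * m)%nat by lia. rewrite oppowD, IH; reflexivity.
Qed.

Lemma oppow_commute A T n : A ** T = T ** A -> A ** T ^^ n = T ^^ n ** A.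
Proof.
  intro H. induction n as [|n IH]; [reflexivity|].
  change (A ** T ** T ^^ n = T ** (T ^^ n ** A)). rewrite H, <- IH; reflexivity.
Qed.

Lemma oppow_bound T M : (forall x, vnorm (T x) <= M * vnorm x) -> 0 <= M ->
  forall n x, vnorm ((T ^^ n) x) <= M ^ n * vnorm x.
Proof.
  intros HM HM0. induction n as [|n IH]; intro x; cbn; [lra|].
  unfold opmul. eapply Rle_trans; [apply HM|].
  rewrite Rmult_assoc. apply Rmult_le_compat_l; auto.
Qed.

End Operators.

Ltac lin :=
  repeat match goal with
  | H : bounded_linear _ ?T |- context [?T (vadd ?u ?v)] => rewrite (bl_add H u v)
  | H : bounded_linear _ ?T |- context [?T (vopp ?u)] => rewrite (bl_opp H u)
  | H : bounded_linear _ ?T |- context [?T vzero] => rewrite (bl_zero H)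
  end.

Ltac bl := repeat match goal with
  | |- bounded_linear _ (opmul _ _ _) => apply bl_mul
  | |- bounded_linear _ (opadd _ _ _) => apply bl_add_op
  | |- bounded_linear _ (opsub _ _ _) => apply bl_sub_op
  | |- bounded_linear _ (oppow _ _ _) => apply bl_pow
  | |- bounded_linear _ op1 => apply bl_op1
  | |- bounded_linear _ op0 => apply bl_op0
  | H : bounded_linear _ ?T |- bounded_linear _ ?T => exact H
  end.

Ltac opext := apply functional_extensionality; intro; unfold opmul, opadd, opsub, op1, op0.

(** * Quasinilpotent operators *)

Lemma Rpower_pos a b : 0 < Rpower a b.
Proof. unfold Rpower; apply exp_pos. Qed.

Lemma Rpower_inv_lt2 C : exists N, forall n, (n > N)%nat -> Rpower C (/ INR n) < 2.
Proof.
  destruct (INR_unbounded (2 * Rabs (ln C))) as [N HN]. exists N. intros n Hn.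
  assert (Hn0 : INR n > INR N) by (apply lt_INR; lia).
  assert (Hpos : 0 < INR n) by (apply lt_0_INR; lia).
  unfold Rpower. rewrite <- (exp_ln 2) by lra. apply exp_increasing.
  assert (Hl : / INR n * ln C <= / INR n * Rabs (ln C)).
  { apply Rmult_le_compat_l; [left; apply Rinv_0_lt_compat; lra|apply Rle_abs]. }
  assert (/ INR n * Rabs (ln C) < / 2).
  { apply Rmult_lt_reg_l with (2 * INR n); [lra|]. field_simplify; lra. }
  assert (H2 := ln_lt_2). lra.
Qed.

Lemma lt_pow_of_nroot n u eps : (n > 0)%nat -> 0 < eps -> nroot n u < eps -> u < eps ^ n.
Proof.
  intros Hn Heps H. destruct (Rle_lt_dec u 0) as [Hle|Hlt]; [apply Rle_lt_trans with 0; auto; apply pow_lt; auto|].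
  unfold nroot in H. destruct (Rlt_dec 0 u) as [_|]; [|lra].
  assert (Hn0 : 0 < INR n) by (apply lt_0_INR; lia).
  rewrite <- (Rpower_pow n eps Heps).
  replace u with (Rpower (Rpower u (/ INR n)) (INR n)) by (rewrite Rpower_mult, Rinv_l, Rpower_1; lra).
  apply Rlt_Rpower_l; auto. split; [apply Rpower_pos|exact H].
Qed.

Lemma finite_max_bound (f : nat -> R) N : exists B, forall n, (n < N)%nat -> f n <= B.
Proof.
  induction N as [|N [B HB]]; [exists 0; intros; lia|].
  exists (Rmax B (f N)). intros n Hn. destruct (Nat.eq_dec n N) as [->|]; [apply Rmax_r|].
  eapply Rle_trans; [apply HB; lia|apply Rmax_l].
Qed.

Section Quasinilpotent.
Context {X : CBanach}.
Implicit Types (S T A B W Z t : X -> X).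

Lemma opnorm_exists T : BL T -> {m | is_opnorm X T m}.
Proof.
  intro H. apply completeness.
  - destruct (bl_bound H) as [M [HM0 HM]]. exists M. intros r [x [Hx ->]].
    eapply Rle_trans; [apply HM|]. rewrite <- (Rmult_1_r M) at 2. apply Rmult_le_compat_l; auto.
  - exists (vnorm (T vzero)), vzero. rewrite vnorm_zero. split; auto; lra.
Qed.

Lemma opnorm_bound T m : BL T -> is_opnorm X T m -> forall x, vnorm (T x) <= m * vnorm x.
Proof.
  intros HT Hm x. destruct (vnorm_nonneg x) as [Hx|Hx].
  - set (k := / vnorm x). assert (Hk : 0 < k) by (apply Rinv_0_lt_compat; auto).
    assert (HTy : vnorm (T (vscal (mkC k 0) x)) <= m).
    { apply Hm. exists (vscal (mkC k 0) x). split; [|reflexivity].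
      rewrite vnorm_scal, Cmod_real, Rabs_pos_eq by lra. unfold k. right; field; lra. }
    rewrite (bl_scal HT), vnorm_scal, Cmod_real, Rabs_pos_eq in HTy by lra.
    apply Rmult_le_compat_r with (r := vnorm x) in HTy; [|lra].
    unfold k in HTy. rewrite Rmult_comm, <- Rmult_assoc, Rinv_r, Rmult_1_l in HTy by lra. exact HTy.
  - symmetry in Hx. apply vnorm_eq0 in Hx. subst. rewrite (bl_zero HT), vnorm_zero. lra.
Qed.

Lemma opnorm_le_bound T m M : is_opnorm X T m -> 0 <= M ->
  (forall x, vnorm (T x) <= M * vnorm x) -> m <= M.
Proof.
  intros [_ Hlub] HM0 HM. apply Hlub. intros r [x [Hx ->]].
  eapply Rle_trans; [apply HM|]. rewrite <- (Rmult_1_r M) at 2. apply Rmult_le_compat_l; auto.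
Qed.

(* Equivalent to [quasinilpotent] for bounded operators, and easier to compute with. *)
Definition qnil T := forall eps, 0 < eps -> exists C, 0 < C /\
  forall n x, vnorm ((T ^^ n) x) <= C * eps ^ n * vnorm x.

Lemma qnil_of_quasinilpotent T : BL T -> quasinilpotent X T -> qnil T.
Proof.
  intros HT [u [Hu Hcv]] eps Heps.
  destruct (Hcv eps Heps) as [N HN]. set (N' := Nat.max N 1).
  assert (Hbig : forall n, (n >= N')%nat -> u n <= eps ^ n).
  { intros n Hn. specialize (HN n ltac:(lia)). unfold R_dist in HN.
    rewrite Rminus_0_r, Rabs_pos_eq in HN by (unfold nroot; destruct Rlt_dec; [left; apply Rpower_pos|lra]).
    left; apply lt_pow_of_nroot; auto; lia. }
  destruct (finite_max_bound (fun n => u n / eps ^ n) N') as [B HB].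
  exists (Rmax 1 B). split; [apply Rlt_le_trans with 1; [lra|apply Rmax_l]|].
  intros n x. eapply Rle_trans; [apply opnorm_bound; [apply bl_pow, HT|apply Hu]|].
  apply Rmult_le_compat_r; [apply vnorm_nonneg|].
  assert (He : 0 < eps ^ n) by (apply pow_lt; auto).
  destruct (Compare_dec.le_lt_dec N' n) as [Hn|Hn].
  - eapply Rle_trans; [apply Hbig; auto|]. rewrite <- (Rmult_1_l (eps ^ n)) at 1.
    apply Rmult_le_compat_r; [lra|apply Rmax_l].
  - replace (u n) with (u n / eps ^ n * eps ^ n) by (field; lra).
    apply Rmult_le_compat_r; [lra|]. eapply Rle_trans; [apply (HB n Hn)|apply Rmax_r].
Qed.

Lemma quasinilpotent_of_qnil T : BL T -> qnil T -> quasinilpotent X T.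
Proof.
  intros HT Hq. exists (fun n => proj1_sig (opnorm_exists (T ^^ n) (bl_pow T n HT))).
  split; [intro n; apply proj2_sig|].
  intros eps Heps. destruct (Hq (eps / 2) ltac:(lra)) as [C [HC HCb]].
  destruct (Rpower_inv_lt2 C) as [N HN]. exists (S N). intros n Hn.
  unfold R_dist. rewrite Rminus_0_r.
  destruct (opnorm_exists (T ^^ n) (bl_pow T n HT)) as [m Hm]; cbn.
  assert (HmC : m <= C * (eps / 2) ^ n).
  { apply (opnorm_le_bound _ _ _ Hm); auto. left; apply Rmult_lt_0_compat; auto; apply pow_lt; lra. }
  unfold nroot. destruct (Rlt_dec 0 m) as [Hmp|Hmp]; [|rewrite Rabs_R0; lra].
  rewrite Rabs_pos_eq by (left; apply Rpower_pos).
  assert (Hn0 : 0 < INR n) by (apply lt_0_INR; lia).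
  eapply Rle_lt_trans; [apply Rle_Rpower_l; [left; apply Rinv_0_lt_compat; auto|split; eauto]|].
  rewrite <- Rpower_mult_distr by (auto; apply pow_lt; lra).
  rewrite <- Rpower_pow, Rpower_mult, Rinv_r, Rpower_1 by lra.
  specialize (HN n ltac:(lia)). assert (0 < Rpower C (/ INR n)) by apply Rpower_pos. nra.
Qed.

Lemma op_eq0_of_geometric t C d : 0 <= d < 1 ->
  (forall n x, vnorm (t x) <= C * d ^ n * vnorm x) -> t = op0.
Proof.
  intros Hd H. apply functional_extensionality; intro x. unfold op0.
  apply vzero_of_norm_small. intros e He.
  assert (Hx := vnorm_nonneg x). assert (HC := Rle_abs C).
  destruct (Rle_lt_dec (Rabs C * vnorm x) 0) as [H0|H0].
  { eapply Rle_trans; [apply (H O x)|]. cbn. nra. }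
  destruct (pow_lt_1_zero d ltac:(rewrite Rabs_pos_eq; lra) (e / (Rabs C * vnorm x)))
    as [N HN]; [apply Rdiv_lt_0_compat; auto|].
  specialize (HN N (le_n _)). rewrite Rabs_pos_eq in HN by (apply pow_le; lra).
  eapply Rle_trans; [apply (H N x)|].
  assert (hp : 0 <= d ^ N) by (apply pow_le; lra).
  apply Rmult_lt_compat_r with (r := Rabs C * vnorm x) in HN; auto.
  unfold Rdiv in HN. rewrite Rmult_assoc, Rinv_l, Rmult_1_r in HN by lra.
  assert (0 <= (Rabs C - C) * (d ^ N * vnorm x)) by (apply Rmult_le_pos; nra). nra.
Qed.

Lemma qnil_op0 : qnil op0.
Proof.
  intros eps Heps. exists 1. split; [lra|]. intros [|n] x; cbn; [lra|].
  unfold opmul, op0. rewrite vnorm_zero. assert (h := vnorm_nonneg x).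
  assert (0 < eps * eps ^ n) by (apply Rmult_lt_0_compat; auto; apply pow_lt; auto). nra.
Qed.

Lemma qnil_of_pow_factor Z A W B : BL A -> BL B -> qnil W ->
  (forall k, Z ^^ S k = A ** (W ^^ k ** B)) -> qnil Z.
Proof.
  intros HA HB Hq Hk eps Heps.
  destruct (bl_bound HA) as [Ma [Ha0 Ha]], (bl_bound HB) as [Mb [Hb0 Hb]].
  destruct (Hq eps Heps) as [C [HC HCb]].
  assert (HK : 0 <= Ma * C * Mb / eps).
  { unfold Rdiv. apply Rmult_le_pos; [apply Rmult_le_pos; nra|left; apply Rinv_0_lt_compat; lra]. }
  exists (1 + Ma * C * Mb / eps). split; [lra|].
  intros [|n] x; assert (hx := vnorm_nonneg x); [cbn; nra|].
  rewrite Hk. unfold opmul. eapply Rle_trans; [apply Ha|].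
  eapply Rle_trans; [apply Rmult_le_compat_l; [auto|apply HCb]|].
  assert (h := vnorm_nonneg (B x)). assert (h2 := Hb x).
  assert (hp : 0 < eps ^ n) by (apply pow_lt; lra).
  apply Rle_trans with (Ma * C * eps ^ n * (Mb * vnorm x)).
  { replace (Ma * (C * eps ^ n * vnorm (B x))) with (Ma * C * eps ^ n * vnorm (B x)) by ring.
    apply Rmult_le_compat_l; auto. apply Rmult_le_pos; [nra|lra]. }
  assert (E : Ma * C * Mb / eps * (eps * eps ^ n) = Ma * C * eps ^ n * Mb) by (field; lra).
  assert (0 <= eps * eps ^ n * vnorm x) by (apply Rmult_le_pos; nra).
  cbn [pow]. rewrite Rmult_plus_distr_r, Rmult_1_l, Rmult_plus_distr_r, E. nra.
Qed.

Lemma qnil_of_sq0 T : BL T -> T ** T = op0 -> qnil T.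
Proof.
  intros HT H. apply (qnil_of_pow_factor T T op0 op1); [auto|apply bl_op1|apply qnil_op0|].
  intros [|k]; [reflexivity|]. opext.
  change ((T ** T) ((T ^^ k) x) = T ((op0 ** op0 ^^ k) x)). rewrite H.
  unfold op0, opmul. rewrite (bl_zero HT). reflexivity.
Qed.

Lemma qnil_cube T : qnil T -> qnil (T ** (T ** T)).
Proof.
  intros qT eps Heps. set (e := Rmin eps 1).
  assert (He : 0 < e) by (unfold e; apply Rmin_glb_lt; lra).
  assert (He1 : e <= 1) by apply Rmin_r. assert (He2 : e <= eps) by apply Rmin_l.
  destruct (qT e He) as [C [HC Hb]]. exists C; split; auto. intros n x.
  change ((T ** (T ** T)) ^^ n) with ((T ^^ 3) ^^ n). rewrite <- oppowM.
  eapply Rle_trans; [apply Hb|]. rewrite pow_mult.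
  apply Rmult_le_compat_r; [apply vnorm_nonneg|]. apply Rmult_le_compat_l; [lra|].
  apply pow_incr. split; [apply pow_le; lra|]. cbn. nra.
Qed.

Lemma qnil_of_cube T : BL T -> qnil (T ** (T ** T)) -> qnil T.
Proof.
  intros HT q3 eps Heps. destruct (bl_bound HT) as [M [HM0 HM]].
  destruct (q3 (eps ^ 3) ltac:(apply pow_lt; lra)) as [C [HC Hb]].
  assert (HMe : 0 <= M / eps) by (unfold Rdiv; apply Rmult_le_pos; [lra|left; apply Rinv_0_lt_compat; lra]).
  set (K := (1 + M / eps) ^ 2).
  assert (HK : 1 <= K) by (apply pow_R1_Rle; lra).
  exists (C * K). split; [nra|]. intros n x.
  rewrite (Nat.div_mod_eq n 3). set (m := (n / 3)%nat). set (j := (n mod 3)%nat).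
  assert (Hj : (j < 3)%nat) by (apply Nat.mod_upper_bound; lia).
  rewrite Nat.add_comm, oppowD, oppowM. unfold opmul.
  change ((T ^^ 3) ^^ m) with ((T ** (T ** T)) ^^ m).
  eapply Rle_trans; [apply (oppow_bound T M HM HM0)|].
  eapply Rle_trans; [apply Rmult_le_compat_l; [apply pow_le; auto|apply Hb]|].
  rewrite <- pow_mult, pow_add.
  assert (hx := vnorm_nonneg x). assert (hp : 0 < eps ^ (3 * m)) by (apply pow_lt; lra).
  assert (Mj : M ^ j <= K * eps ^ j).
  { replace (M ^ j) with ((M / eps) ^ j * eps ^ j)
      by (unfold Rdiv; rewrite Rpow_mult_distr, pow_inv, Rmult_assoc, Rinv_l;
          [ring|apply pow_nonzero; lra]).
    apply Rmult_le_compat_r; [apply pow_le; lra|]. unfold K.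
    destruct j as [|[|[|j]]]; cbn; nra || lia. }
  assert (0 <= C * eps ^ (3 * m) * vnorm x) by (apply Rmult_le_pos; nra).
  apply Rle_trans with (K * eps ^ j * (C * eps ^ (3 * m) * vnorm x)); [apply Rmult_le_compat_r; auto|].
  right; ring.
Qed.

Lemma INR_S_le_pow2 k : INR (S k) <= 2 ^ k.
Proof.
  induction k as [|k IH]; cbn -[INR]; [cbn; lra|].
  rewrite S_INR. assert (1 <= 2 ^ k) by (apply pow_R1_Rle; lra). lra.
Qed.

Section QnilAddMul0.
Variables g h : X -> X.
Hypotheses (Hg : BL g) (Hh : BL h) (Hgh : g ** h = op0).

Let gh0 y : g (h y) = vzero := opE Hgh y.

Lemma mul_pow_add_mul0 k : g ** (g +++ h) ^^ k = g ^^ S k.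
Proof.
  induction k as [|k IH]; [reflexivity|]. opext.
  change (g (vadd (g (((g +++ h) ^^ k) x)) (h (((g +++ h) ^^ k) x))) = g ((g ^^ S k) x)).
  rewrite (bl_add Hg), gh0, vadd_0, <- (opE IH). reflexivity.
Qed.

(* Since [g h = 0], every word in [g] and [h] of length [k] that survives is [h^i g^(k-i)]. *)
Lemma pow_add_mul0_bound e Cg Ch : 0 < e -> 0 < Cg -> 0 < Ch ->
  (forall n x, vnorm ((g ^^ n) x) <= Cg * e ^ n * vnorm x) ->
  (forall n x, vnorm ((h ^^ n) x) <= Ch * e ^ n * vnorm x) ->
  forall k m x, vnorm ((h ^^ m) (((g +++ h) ^^ k) x)) <= INR (S k) * (Ch * Rmax 1 Cg) * e ^ (m + k) * vnorm x.
Proof.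
  intros He HCg HCh Hbg Hbh. assert (H1 := Rmax_l 1 Cg). assert (H2 := Rmax_r 1 Cg).
  induction k as [|k IH]; intros m x; assert (hx := vnorm_nonneg x);
    assert (hm : 0 < e ^ m) by (apply pow_lt; lra).
  - rewrite Nat.add_0_r. eapply Rle_trans; [apply Hbh|]. cbn [INR oppow].
    assert (0 <= Ch * e ^ m * vnorm x) by (apply Rmult_le_pos; nra). nra.
  - change (((g +++ h) ^^ S k) x) with
      (vadd ((g ** (g +++ h) ^^ k) x) (h (((g +++ h) ^^ k) x))).
    rewrite mul_pow_add_mul0, (bl_add (bl_pow h m Hh)).
    eapply Rle_trans; [apply vnorm_triangle|].
    change ((h ^^ m) (h (((g +++ h) ^^ k) x))) with (((h ^^ m) ** h) (((g +++ h) ^^ k) x)).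
    rewrite <- oppowSr.
    assert (B1 : vnorm ((h ^^ m) ((g ^^ S k) x)) <= Ch * Rmax 1 Cg * e ^ (m + S k) * vnorm x).
    { eapply Rle_trans; [apply Hbh|].
      eapply Rle_trans; [apply Rmult_le_compat_l; [apply Rmult_le_pos; [lra|apply pow_le; lra]|apply Hbg]|].
      rewrite pow_add. assert (hq : 0 < e ^ S k) by (apply pow_lt; lra).
      assert (0 <= Ch * e ^ m * (e ^ S k * vnorm x)) by (apply Rmult_le_pos; nra).
      replace (Ch * e ^ m * (Cg * e ^ S k * vnorm x)) with (Cg * (Ch * e ^ m * (e ^ S k * vnorm x))) by ring.
      replace (Ch * Rmax 1 Cg * (e ^ m * e ^ S k) * vnorm x)
        with (Rmax 1 Cg * (Ch * e ^ m * (e ^ S k * vnorm x))) by ring.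
      apply Rmult_le_compat_r; auto. }
    specialize (IH (S m) x). replace (S m + k)%nat with (m + S k)%nat in IH by lia.
    rewrite (S_INR (S k)). lra.
Qed.

Lemma qnilD_mul0 : qnil g -> qnil h -> qnil (g +++ h).
Proof.
  intros qg qh eps Heps. set (e := eps / 2).
  destruct (qg e ltac:(unfold e; lra)) as [Cg [HCg Hbg]].
  destruct (qh e ltac:(unfold e; lra)) as [Ch [HCh Hbh]].
  set (D := Ch * Rmax 1 Cg).
  assert (HD : 0 < D) by (apply Rmult_lt_0_compat; [lra|apply Rlt_le_trans with 1; [lra|apply Rmax_l]]).
  exists D. split; auto. intros n x.
  eapply Rle_trans; [apply (pow_add_mul0_bound e Cg Ch ltac:(unfold e; lra) HCg HCh Hbg Hbh n O x)|].
  cbn [Nat.add oppow]. unfold e.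
  replace ((eps / 2) ^ n) with (eps ^ n / 2 ^ n) by (unfold Rdiv; rewrite Rpow_mult_distr, pow_inv; reflexivity).
  assert (hx := vnorm_nonneg x). assert (h2 := INR_S_le_pow2 n).
  assert (hp : 0 < 2 ^ n) by (apply pow_lt; lra). assert (he : 0 < eps ^ n) by (apply pow_lt; lra).
  fold D.
  assert (Hq : INR (S n) / 2 ^ n <= 1).
  { apply Rmult_le_reg_r with (2 ^ n); auto. unfold Rdiv; rewrite Rmult_assoc, Rinv_l; lra. }
  replace (INR (S n) * D * (eps ^ n / 2 ^ n) * vnorm x)
    with (INR (S n) / 2 ^ n * (D * eps ^ n * vnorm x)) by (field; lra).
  assert (0 <= D * eps ^ n * vnorm x) by (apply Rmult_le_pos; nra). nra.
Qed.

End QnilAddMul0.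

Lemma qnil_of_pow_perturb Z z (W : nat -> X -> X) : qnil z ->
  (forall k x, (Z ^^ S k) x = vadd ((z ^^ S k) x) (vopp (W k x))) ->
  (forall eps, 0 < eps -> exists C, 0 < C /\ forall k x, vnorm (W k x) <= C * eps ^ k * vnorm x) ->
  qnil Z.
Proof.
  intros qz HZ HW eps Heps.
  destruct (qz eps Heps) as [C1 [HC1 H1]], (HW eps Heps) as [C2 [HC2 H2]].
  assert (Hc : 0 < C2 / eps) by (apply Rdiv_lt_0_compat; auto).
  exists (1 + C1 + C2 / eps). split; [lra|].
  intros [|n] x; assert (hx := vnorm_nonneg x); [cbn; nra|].
  rewrite HZ. eapply Rle_trans; [apply vnorm_triangle|]. rewrite vnorm_opp.
  specialize (H1 (S n) x). specialize (H2 n x).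
  assert (hp : 0 < eps ^ n) by (apply pow_lt; auto).
  assert (E : C2 * eps ^ n * vnorm x = C2 / eps * eps ^ S n * vnorm x) by (cbn; field; lra).
  assert (0 <= eps ^ S n * vnorm x) by (apply Rmult_le_pos; [apply pow_le; lra|lra]).
  nra.
Qed.

Lemma qnil_sub_r z V : BL z -> BL V -> qnil z -> V ** z = op0 -> V ** V = op0 ->
  (forall eps, 0 < eps -> exists C, 0 < C /\
     forall k x, vnorm ((z ^^ k) (V x)) <= C * eps ^ k * vnorm x) ->
  qnil (z --- V).
Proof.
  intros Hz HV qz H1 H2 Hb.
  assert (K1 : forall k x, V ((z ^^ S k) x) = vzero).
  { intros k x. exact (opE H1 ((z ^^ k) x)). }
  assert (K2 : forall k x, V ((z ^^ k) (V x)) = vzero).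
  { intros [|k] x; [exact (opE H2 x)|apply K1]. }
  apply (qnil_of_pow_perturb _ z (fun k => z ^^ k ** V)); auto.
  intros k x. induction k as [|k IH] in x |- *; [reflexivity|].
  change (((z --- V) ^^ S (S k)) x)
    with (vadd (z (((z --- V) ^^ S k) x)) (vopp (V (((z --- V) ^^ S k) x)))).
  rewrite !IH. unfold opmul.
  assert (HzS := bl_pow z (S k) Hz). assert (Hzk := bl_pow z k Hz). lin.
  rewrite K1, K2. change (z ((z ^^ S k) x)) with ((z ^^ S (S k)) x).
  change (z ((z ^^ k) (V x))) with ((z ^^ S k) (V x)). vgroup.
Qed.

Lemma qnil_sub_l z V : BL z -> BL V -> qnil z -> z ** V = op0 -> V ** V = op0 ->
  (forall eps, 0 < eps -> exists C, 0 < C /\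
     forall k x, vnorm (V ((z ^^ k) x)) <= C * eps ^ k * vnorm x) ->
  qnil (z --- V).
Proof.
  intros Hz HV qz H1 H2 Hb.
  assert (K1 : forall y, z (V y) = vzero) by exact (opE H1).
  assert (K2 : forall y, V (V y) = vzero) by exact (opE H2).
  apply (qnil_of_pow_perturb _ z (fun k => V ** z ^^ k)); auto.
  intros k x. induction k as [|k IH] in x |- *; [reflexivity|].
  change (((z --- V) ^^ S (S k)) x)
    with (vadd (z (((z --- V) ^^ S k) x)) (vopp (V (((z --- V) ^^ S k) x)))).
  rewrite !IH. unfold opmul. lin.
  rewrite !K1, !K2. change (z ((z ^^ S k) x)) with ((z ^^ S (S k)) x).
  change (V (z ((z ^^ k) x))) with (V ((z ^^ S k) x)). vgroup.
Qed.

End Quasinilpotent.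

(** * Series of operators *)

Section Series.
Context {X : CBanach}.
Implicit Types (S T A B : X -> X) (F G : nat -> X -> X) (u : nat -> X).

Definition vlim u (l : X) := forall eps, 0 < eps -> exists N, forall n, (n >= N)%nat ->
  vnorm (vadd (u n) (vopp l)) < eps.

Fixpoint opsum F (n : nat) (x : X) : X :=
  match n with O => vzero | S k => vadd (opsum F k x) (F k x) end.

Definition op_sums F S := forall x, vlim (fun n => opsum F n x) (S x).

Definition geom_bounded F (K : R) := forall n x, vnorm (F n x) <= K * (/ 2) ^ n * vnorm x.

Lemma vlim_unique u l l' : vlim u l -> vlim u l' -> l = l'.
Proof.
  intros H1 H2. apply vsub_eq0, vzero_of_norm_small. intros e He.
  destruct (H1 (e / 2) ltac:(lra)) as [N1 HN1], (H2 (e / 2) ltac:(lra)) as [N2 HN2].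
  specialize (HN1 (Nat.max N1 N2) ltac:(lia)). specialize (HN2 (Nat.max N1 N2) ltac:(lia)).
  eapply Rle_trans; [apply (vnorm_sub_triangle l (u (Nat.max N1 N2)) l')|].
  rewrite vnorm_sub_sym in HN1. lra.
Qed.

Lemma vlim_add u v l m : vlim u l -> vlim v m -> vlim (fun n => vadd (u n) (v n)) (vadd l m).
Proof.
  intros H1 H2 e He.
  destruct (H1 (e / 2) ltac:(lra)) as [N1 HN1], (H2 (e / 2) ltac:(lra)) as [N2 HN2].
  exists (Nat.max N1 N2). intros n Hn. specialize (HN1 n ltac:(lia)). specialize (HN2 n ltac:(lia)).
  replace (vadd (vadd (u n) (v n)) (vopp (vadd l m)))
    with (vadd (vadd (u n) (vopp l)) (vadd (v n) (vopp m))) by vgroup.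
  eapply Rle_lt_trans; [apply vnorm_triangle|lra].
Qed.

Lemma vlim_lipschitz (f : X -> X) M u l : 0 <= M ->
  (forall y z, vnorm (vadd (f y) (vopp (f z))) <= M * vnorm (vadd y (vopp z))) ->
  vlim u l -> vlim (fun n => f (u n)) (f l).
Proof.
  intros HM0 HM H e He.
  destruct (H (e / (M + 1)) ltac:(apply Rdiv_lt_0_compat; lra)) as [N HN].
  exists N. intros n Hn. specialize (HN n Hn).
  eapply Rle_lt_trans; [apply HM|].
  apply Rle_lt_trans with ((M + 1) * vnorm (vadd (u n) (vopp l))).
  { apply Rmult_le_compat_r; [apply vnorm_nonneg|lra]. }
  apply Rmult_lt_reg_l with (/ (M + 1)); [apply Rinv_0_lt_compat; lra|].
  rewrite <- Rmult_assoc, Rinv_l, Rmult_1_l by lra. unfold Rdiv in HN; lra.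
Qed.

Lemma vlim_bl A u l : BL A -> vlim u l -> vlim (fun n => A (u n)) (A l).
Proof.
  intro HA. destruct (bl_bound HA) as [M [HM0 HM]]. apply (vlim_lipschitz A M); auto.
  intros y z. rewrite <- (bl_opp HA), <- (bl_add HA). apply HM.
Qed.

Lemma vlim_scal c u l : vlim u l -> vlim (fun n => vscal c (u n)) (vscal c l).
Proof.
  apply (vlim_lipschitz (vscal c) (Cmod c)); [apply sqrt_pos|].
  intros y z. rewrite <- vscal_opp, <- vscal_addv, vnorm_scal. lra.
Qed.

Lemma vlim_shift u l : vlim (fun n => u (S n)) l -> vlim u l.
Proof.
  intros H e He. destruct (H e He) as [N HN]. exists (S N). intros [|n] Hn; [lia|apply HN; lia].
Qed.

Lemma vlim_norm_le u l r : vlim u l -> (forall n, vnorm (u n) <= r) -> vnorm l <= r.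
Proof.
  intros H Hb. apply Rnot_lt_le; intro Hl.
  destruct (H (vnorm l - r) ltac:(lra)) as [N HN]. specialize (HN N (le_n _)).
  assert (T := vnorm_triangle (vadd (u N) (vopp l)) (vopp (u N))).
  replace (vadd (vadd (u N) (vopp l)) (vopp (u N))) with (vopp l) in T by vgroup.
  rewrite !vnorm_opp in T. specialize (Hb N). lra.
Qed.

Lemma bl_opsum F n : (forall k, BL (F k)) -> BL (opsum F n).
Proof.
  intro HF. induction n as [|n IH]; [apply bl_op0|].
  change (BL (opsum F n +++ F n)). apply bl_add_op; auto.
Qed.

Lemma opsum_mul_l A F n x : BL A -> A (opsum F n x) = opsum (fun k => A ** F k) n x.
Proof.
  intro HA. induction n as [|n IH]; cbn; [apply bl_zero, HA|]. rewrite (bl_add HA), IH; reflexivity.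
Qed.

Lemma opsum_mul_r B F n x : opsum F n (B x) = opsum (fun k => F k ** B) n x.
Proof. induction n as [|n IH]; cbn; [reflexivity|rewrite IH; reflexivity]. Qed.

Lemma opsumSl F n x : opsum F (S n) x = vadd (F O x) (opsum (fun k => F (S k)) n x).
Proof.
  induction n as [|n IH]; cbn; [rewrite vadd_0l, vadd_0; reflexivity|].
  cbn in IH. rewrite IH. vgroup.
Qed.

Lemma opsum_geom_cauchy F K : 0 <= K -> geom_bounded F K -> forall n d x,
  vnorm (vadd (opsum F (n + d) x) (vopp (opsum F n x)))
  <= 2 * K * ((/ 2) ^ n - (/ 2) ^ (n + d)) * vnorm x.
Proof.
  intros HK Hg n d x. induction d as [|d IH].
  - rewrite Nat.add_0_r, vadd_opp, vnorm_zero. right; ring.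
  - replace (n + S d)%nat with (S (n + d)) by lia. cbn [opsum].
    replace (vadd (vadd (opsum F (n + d) x) (F (n + d)%nat x)) (vopp (opsum F n x)))
      with (vadd (vadd (opsum F (n + d) x) (vopp (opsum F n x))) (F (n + d)%nat x)) by vgroup.
    eapply Rle_trans; [apply vnorm_triangle|]. specialize (Hg (n + d)%nat x). cbn. lra.
Qed.

Lemma opsum_geom_bound F K : 0 <= K -> geom_bounded F K -> forall n x,
  vnorm (opsum F n x) <= 2 * K * vnorm x.
Proof.
  intros HK Hg n x. assert (h := opsum_geom_cauchy F K HK Hg O n x). cbn [opsum] in h.
  rewrite vopp_zero, vadd_0 in h. eapply Rle_trans; [apply h|]. cbn.
  assert (0 <= (/ 2) ^ n) by (apply pow_le; lra). assert (hx := vnorm_nonneg x).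
  assert (0 <= K * vnorm x * (/ 2) ^ n) by (apply Rmult_le_pos; [apply Rmult_le_pos|]; lra). nra.
Qed.

Lemma opsum_geom_vlim F K x : 0 <= K -> geom_bounded F K -> exists l, vlim (fun n => opsum F n x) l.
Proof.
  intros HK Hg. apply vcomplete. intros e He. assert (hx := vnorm_nonneg x).
  set (c := 2 * K * vnorm x + 1). assert (Hc : 0 < c) by (unfold c; nra).
  destruct (pow_lt_1_zero (/ 2) ltac:(rewrite Rabs_pos_eq; lra) (e / c)) as [N HN];
    [apply Rdiv_lt_0_compat; auto|].
  assert (Hgen : forall a b, (a >= N)%nat -> (b >= a)%nat ->
    vnorm (vadd (opsum F b x) (vopp (opsum F a x))) < e).
  { intros a b Ha Hb. replace b with (a + (b - a))%nat by lia.
    eapply Rle_lt_trans; [apply (opsum_geom_cauchy F K); auto|].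
    specialize (HN a Ha). rewrite Rabs_pos_eq in HN by (apply pow_le; lra).
    assert (hp : 0 <= (/ 2) ^ (a + (b - a))) by (apply pow_le; lra).
    assert (0 <= 2 * K * vnorm x * (/ 2) ^ (a + (b - a))) by (apply Rmult_le_pos; nra).
    assert (HN2 : (/ 2) ^ a * c < e).
    { apply (Rmult_lt_compat_r c) in HN; auto. unfold Rdiv in HN.
      rewrite Rmult_assoc, Rinv_l, Rmult_1_r in HN by lra. exact HN. }
    assert (0 <= (/ 2) ^ a) by (apply pow_le; lra). unfold c in HN2. nra. }
  exists N. intros m n Hm Hn. destruct (Compare_dec.le_ge_dec m n) as [H|H].
  - rewrite vnorm_sub_sym. apply Hgen; auto.
  - apply Hgen; auto.
Qed.

Lemma op_sums_exists F K : (forall k, BL (F k)) -> 0 <= K -> geom_bounded F K ->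
  exists S, BL S /\ op_sums F S.
Proof.
  intros HF HK Hg.
  set (S := fun x => proj1_sig (constructive_indefinite_description _ (opsum_geom_vlim F K x HK Hg))).
  assert (HS : op_sums F S) by (intro x; apply proj2_sig).
  exists S. split; [split; [|split]|exact HS].
  - intros x y. apply (vlim_unique (fun n => opsum F n (vadd x y))); [apply HS|].
    rewrite (functional_extensionality _ _ (fun n => bl_add (bl_opsum F n HF) x y)).
    apply vlim_add; apply HS.
  - intros c x. apply (vlim_unique (fun n => opsum F n (vscal c x))); [apply HS|].
    rewrite (functional_extensionality _ _ (fun n => bl_scal (bl_opsum F n HF) c x)).
    apply vlim_scal, HS.
  - exists (2 * K). intro x. apply (vlim_norm_le (fun n => opsum F n x)); [apply HS|].
    intro n. apply opsum_geom_bound; auto.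
Qed.

Lemma op_sums_unique F S T : op_sums F S -> op_sums F T -> S = T.
Proof. intros H1 H2. apply functional_extensionality; intro x. eapply vlim_unique; eauto. Qed.

Lemma op_sums_mul_l A F S : BL A -> op_sums F S -> op_sums (fun n => A ** F n) (A ** S).
Proof.
  intros HA Hs x. unfold opmul at 2.
  rewrite <- (functional_extensionality _ _ (fun n => opsum_mul_l A F n x HA)).
  apply vlim_bl; auto.
Qed.

Lemma op_sums_mul_r B F S : op_sums F S -> op_sums (fun n => F n ** B) (S ** B).
Proof.
  intros Hs x. unfold opmul at 2.
  rewrite <- (functional_extensionality _ _ (fun n => opsum_mul_r B F n x)). apply Hs.
Qed.

Lemma op_sums_ext F G S : (forall n, F n = G n) -> op_sums F S -> op_sums G S.
Proof. intros H. replace G with F; [auto|apply functional_extensionality; auto]. Qed.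

Lemma op_sumsSl F T : op_sums (fun n => F (S n)) T -> op_sums F (F O +++ T).
Proof.
  intros H x. apply vlim_shift. unfold opadd.
  rewrite (functional_extensionality _ _ (fun n => opsumSl F n x)).
  apply vlim_add; auto. intros e He; exists O; intros; rewrite vadd_opp, vnorm_zero; auto.
Qed.

Lemma op_sums0 : op_sums (fun _ => op0) op0.
Proof.
  intros x e He. exists O. intros n _.
  assert (opsum (fun _ => op0) n x = vzero).
  { induction n as [|n IH]; cbn; [reflexivity|rewrite IH; apply vadd_0]. }
  rewrite H. unfold op0. rewrite vadd_opp, vnorm_zero; auto.
Qed.

Lemma op_sums_eq0 F S : op_sums F S -> (forall n, F n = op0) -> S = op0.
Proof. intros H HF. apply (op_sums_unique F); auto. apply (op_sums_ext (fun _ => op0)); auto using op_sums0. Qed.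

Lemma op_sums_single F : (forall n, F (S n) = op0) -> op_sums F (F O).
Proof.
  intro H. replace (F O) with (F O +++ op0) by (opext; apply vadd_0).
  apply op_sumsSl. apply (op_sums_ext (fun _ => op0)); auto using op_sums0.
Qed.

Lemma qnil_geom_domination A M : qnil A -> 0 <= M -> exists C, 0 < C /\
  forall n x, M ^ n * vnorm ((A ^^ n) x) <= C * (/ 2) ^ n * vnorm x.
Proof.
  intros qA HM0. set (eps := / (2 * (M + 1))).
  assert (Heps : 0 < eps) by (unfold eps; apply Rinv_0_lt_compat; lra).
  assert (HepsM : eps * M <= / 2).
  { unfold eps. apply Rmult_le_reg_l with (2 * (M + 1)); [lra|]. rewrite <- Rmult_assoc, Rinv_r by lra. lra. }
  destruct (qA eps Heps) as [C [HC Hb]]. exists C. split; auto. intros n x.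
  assert (hMn : 0 <= M ^ n) by (apply pow_le; auto).
  eapply Rle_trans; [apply Rmult_le_compat_l; [auto|apply Hb]|].
  replace (M ^ n * (C * eps ^ n * vnorm x)) with (C * (eps * M) ^ n * vnorm x) by (rewrite Rpow_mult_distr; ring).
  apply Rmult_le_compat_r; [apply vnorm_nonneg|]. apply Rmult_le_compat_l; [lra|].
  apply pow_incr. split; [nra|lra].
Qed.

End Series.

(** * Generalized Drazin inverses *)

Section GDrazin.
Context {X : CBanach}.
Implicit Types (S T A B W Z : X -> X).

Definition gdrazin T S := BL S /\ S ** (T ** S) = S /\ T ** S = S ** T /\ qnil (T --- T ** T ** S).

Lemma has_gDrazinP T : BL T -> has_gDrazin X T <-> exists S, gdrazin T S.
Proof.
  intro HT. split; intros [S [HS [H1 [H2 H3]]]]; exists S; (split; [auto|split; [auto|split; [auto|]]]).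
  - apply qnil_of_quasinilpotent; auto. bl.
  - apply quasinilpotent_of_qnil; auto. bl.
Qed.

Lemma gdrazin_cline x y w : BL x -> BL y -> gdrazin (x ** y) w -> gdrazin (y ** x) (y ** w ** w ** x).
Proof.
  intros Hx Hy [Hw [H1 [H2 H3]]].
  assert (R1 : forall z, w (x (y z)) = x (y (w z))) by (intro z; symmetry; apply (opE H2 z)).
  assert (R2 : forall z, w (x (y (w z))) = w z) by apply (opE H1).
  split; [bl|split; [|split]].
  - opext. rewrite R1, R2, R2. reflexivity.
  - opext. rewrite <- R1, R2, R1, R2. reflexivity.
  - set (rho := x ** y --- x ** y ** (x ** y) ** w) in H3.
    apply (qnil_of_pow_factor _ y rho (x --- x ** y ** w ** x)); [auto|bl|auto|].
    intro k. induction k as [|k IH]; opext.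
    + cbn. unfold opmul, opsub. lin. rewrite <- R1, R2. reflexivity.
    + change (((y ** x --- y ** x ** (y ** x) ** (y ** w ** w ** x)) ** ((y ** x
        --- y ** x ** (y ** x) ** (y ** w ** w ** x)) ^^ S k)) x0
        = y (rho ((rho ^^ k) ((x --- x ** y ** w ** x) x0)))).
      rewrite IH. set (v := (rho ^^ k) ((x --- x ** y ** w ** x) x0)).
      unfold rho, opmul, opsub in *. lin. rewrite R1, R2. reflexivity.
Qed.

Lemma gdrazin_cube T S : BL T -> gdrazin T S -> gdrazin (T ** (T ** T)) (S ** (S ** S)).
Proof.
  intros HT [HS [H1 [H2 H3]]].
  assert (C : forall z, T (S z) = S (T z)) by apply (opE H2).
  assert (P : forall z, S (T (S z)) = S z) by apply (opE H1).
  assert (Q : forall z, T (T (S (S z))) = T (S z)) by (intro z; rewrite (C (S z)), P; reflexivity).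
  split; [bl|split; [|split]].
  - opext. rewrite C, P, C, P, P. reflexivity.
  - opext. rewrite !C. reflexivity.
  - replace (T ** (T ** T) --- T ** (T ** T) ** (T ** (T ** T)) ** (S ** (S ** S)))
      with ((T --- T ** T ** S) ** ((T --- T ** T ** S) ** (T --- T ** T ** S))).
    + apply qnil_cube; auto.
    + opext. lin. rewrite <- !C, !Q. vgroup.
Qed.

Lemma qnil_sandwich_geometric A B Z : qnil A -> BL B -> BL Z -> exists C, 0 <= C /\ forall n x,
  vnorm ((A ^^ n) (Z ((B ^^ n) x))) <= C * (/ 2) ^ n * vnorm x /\
  vnorm ((B ^^ n) (Z ((A ^^ n) x))) <= C * (/ 2) ^ n * vnorm x.
Proof.
  intros qA HB HZ. destruct (bl_bound HB) as [M [HM0 HM]], (bl_bound HZ) as [Mz [HMz0 HMz]].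
  assert (HM' : forall x, vnorm (B x) <= (M + 1) * vnorm x).
  { intro x. eapply Rle_trans; [apply HM|]. apply Rmult_le_compat_r; [apply vnorm_nonneg|lra]. }
  destruct (qnil_geom_domination A (M + 1) qA ltac:(lra)) as [C [HC HD]].
  exists (C * Mz). split; [nra|]. intros n x.
  assert (Hp : 0 < (M + 1) ^ n) by (apply pow_lt; lra).
  assert (HBn := oppow_bound B (M + 1) HM' ltac:(lra) n).
  assert (hx := vnorm_nonneg x). assert (hh : 0 <= (/ 2) ^ n) by (apply pow_le; lra).
  split.
  - apply Rmult_le_reg_l with ((M + 1) ^ n); auto.
    eapply Rle_trans; [apply HD|].
    eapply Rle_trans; [apply Rmult_le_compat_l; [nra|apply HMz]|].
    assert (H := HBn x). assert (0 <= C * (/ 2) ^ n * Mz) by (apply Rmult_le_pos; nra).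
    replace ((M + 1) ^ n * (C * Mz * (/ 2) ^ n * vnorm x))
      with (C * (/ 2) ^ n * Mz * ((M + 1) ^ n * vnorm x)) by ring.
    rewrite <- Rmult_assoc. apply Rmult_le_compat_l; auto.
  - eapply Rle_trans; [apply HBn|].
    eapply Rle_trans; [apply Rmult_le_compat_l; [lra|apply HMz]|].
    specialize (HD n x).
    replace ((M + 1) ^ n * (Mz * vnorm ((A ^^ n) x))) with (Mz * ((M + 1) ^ n * vnorm ((A ^^ n) x))) by ring.
    replace (C * Mz * (/ 2) ^ n * vnorm x) with (Mz * (C * (/ 2) ^ n * vnorm x)) by ring.
    apply Rmult_le_compat_l; auto.
Qed.

Lemma op_eq0_of_qnil_sandwich T A B Z : qnil A -> BL B -> BL Z ->
  (forall n, T = A ^^ S n ** (Z ** B ^^ S n)) \/ (forall n, T = B ^^ S n ** (Z ** A ^^ S n)) ->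
  T = op0.
Proof.
  intros qA HB HZ HT. destruct (qnil_sandwich_geometric A B Z qA HB HZ) as [C [HC Hb]].
  apply (op_eq0_of_geometric T (C / 2) (/ 2)); [lra|]. intros n x.
  replace (C / 2 * (/ 2) ^ n) with (C * (/ 2) ^ S n) by (cbn; field).
  destruct HT as [HT|HT]; rewrite (HT n); apply (Hb (S n) x).
Qed.

(* With [p = 1 - y w] and [rho = y p] quasinilpotent, [p z y w = rho^(n+1) z w^(n+1)] and
   [y w z p = w^(n+1) z rho^(n+1)] for every [n], so both vanish. *)
Section GDrazinCommute.
Variables y w z : X -> X.
Hypotheses (Hy : BL y) (Hz : BL z) (Hyw : gdrazin y w) (Hzy : z ** y = y ** z).

Let Hw : BL w := proj1 Hyw.
Let wyw v : w (y (w v)) = w v := opE (proj1 (proj2 Hyw)) v.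
Let yw v : y (w v) = w (y v) := opE (proj1 (proj2 (proj2 Hyw))) v.
Let zy v : z (y v) = y (z v) := opE Hzy v.
Let yww v : y (w (w v)) = w v := eq_trans (yw (w v)) (wyw v).
Let wny n u : (w ^^ n) (y u) = y ((w ^^ n) u) :=
  eq_sym (opE (oppow_commute y w n (functional_extensionality _ _ yw)) u).
Let rho := y --- y ** y ** w.

Lemma gdrazin_rho_y u : rho (y u) = rho (rho u).
Proof. unfold rho, opsub, opmul. lin. repeat rewrite <- yw. rewrite ?yww. vgroup. Qed.

Lemma gdrazin_rho_pow_y n u : (rho ^^ S n) (y u) = (rho ^^ S (S n)) u.
Proof.
  rewrite (oppowSr rho n), (oppowSr rho (S n)). unfold opmul at 1 2.
  rewrite gdrazin_rho_y, (oppowSr rho n). reflexivity.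
Qed.

Lemma gdrazin_y_rho u : y (rho u) = rho (rho u).
Proof. unfold rho, opsub, opmul. lin. repeat rewrite <- yw. rewrite ?yww. vgroup. Qed.

Lemma gdrazin_commute_l n : (op1 --- y ** w) ** (z ** (y ** w)) = rho ^^ S n ** (z ** w ^^ S n).
Proof.
  induction n as [|n IH].
  - opext. cbn. unfold rho, opmul, opsub. lin. repeat (rewrite zy || rewrite <- yw). reflexivity.
  - rewrite IH. opext.
    replace ((w ^^ S n) x) with (y ((w ^^ S (S n)) x)).
    + rewrite zy. apply gdrazin_rho_pow_y.
    + change (y (w (w ((w ^^ n) x))) = (w ^^ S n) x). rewrite yww. reflexivity.
Qed.

Lemma gdrazin_commute_r n : (y ** w) ** (z ** (op1 --- y ** w)) = w ^^ S n ** (z ** rho ^^ S n).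
Proof.
  induction n as [|n IH].
  - opext. cbn. unfold rho, opmul, opsub. lin. repeat (rewrite zy || rewrite <- yw). reflexivity.
  - rewrite IH. opext.
    replace ((w ^^ S n) (z ((rho ^^ S n) x))) with ((w ^^ S (S n)) (y (z ((rho ^^ S n) x)))).
    + rewrite <- zy. change (y ((rho ^^ S n) x)) with (y (rho ((rho ^^ n) x))).
      rewrite gdrazin_y_rho. reflexivity.
    + cbn [oppow]. unfold opmul. rewrite wny, <- yw, wyw. reflexivity.
Qed.

Lemma gdrazin_commute : z ** w = w ** z.
Proof.
  assert (qrho : qnil rho) by apply Hyw.
  assert (Hrho : BL rho) by (unfold rho; bl).
  assert (T1 := op_eq0_of_qnil_sandwich _ rho w z qrho Hw Hz (or_introl gdrazin_commute_l)).
  assert (T2 := op_eq0_of_qnil_sandwich _ rho w z qrho Hw Hz (or_intror gdrazin_commute_r)).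
  assert (E : forall v, z (y (w v)) = y (w (z v))).
  { intro v. transitivity (y (w (z (y (w v))))).
    - apply vsub_eq0. exact (opE T1 v).
    - symmetry. apply vsub_eq0. generalize (opE T2 v). unfold opmul, opsub, op1, op0. lin. auto. }
  opext. rewrite <- (wyw (z x)), <- E, zy, <- yw, <- E, yww. reflexivity.
Qed.

End GDrazinCommute.

Lemma gdrazin_of_cube T W : BL T -> gdrazin (T ** (T ** T)) W -> gdrazin T (T ** T ** W).
Proof.
  intros HT GW. assert (HTW : T ** W = W ** T).
  { apply (gdrazin_commute (T ** (T ** T))); [bl|auto|auto|reflexivity]. }
  destruct GW as [HW [H1 [H2 H3]]].
  assert (C : forall z, T (W z) = W (T z)) by apply (opE HTW).
  assert (P : forall z, W (T (T (T (W z)))) = W z) by apply (opE H1).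
  assert (Q : forall z, T (T (T (W (W z)))) = W z).
  { intro z. rewrite (C (W z)), (C (T (W z))), (C (T (T (W z)))), P. reflexivity. }
  split; [bl|split; [|split]].
  - opext. rewrite P. reflexivity.
  - opext. rewrite <- C. reflexivity.
  - apply qnil_of_cube; [bl|].
    replace ((T --- T ** T ** (T ** T ** W)) ** ((T --- T ** T ** (T ** T ** W)) ** (T --- T ** T ** (T ** T ** W))))
      with (T ** (T ** T) --- T ** (T ** T) ** (T ** (T ** T)) ** W); [exact H3|].
    opext. lin. rewrite <- !C, !Q. vgroup.
Qed.

(** * Additive perturbations *)

(* The g-Drazin inverse of [P + N] is [sum_n N^n P'^(n+1)]. *)
Section GDrazinAddQnil.
Variables P P' N : X -> X.
Hypotheses (HP : BL P) (HN : BL N) (HPP' : gdrazin P P') (qN : qnil N) (HPN : P ** N = op0).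

Let HP' : BL P' := proj1 HPP'.
Let P'PP' z : P' (P (P' z)) = P' z := opE (proj1 (proj2 HPP')) z.
Let PP' z : P (P' z) = P' (P z) := opE (proj1 (proj2 (proj2 HPP'))) z.
Let PN z : P (N z) = vzero := opE HPN z.

Let P'N z : P' (N z) = vzero.
Proof. rewrite <- P'PP', PP', PN. lin. reflexivity. Qed.

Definition qnil_perturb_term n := N ^^ n ** P' ^^ S n.

Lemma qnil_perturb_sums : exists s, BL s /\ op_sums qnil_perturb_term s.
Proof.
  destruct (bl_bound HP') as [M [HM0 HM]].
  destruct (qnil_sandwich_geometric N P' op1 qN HP' bl_op1) as [C [HC Hb]].
  apply (op_sums_exists _ (C * M)); [intro n; unfold qnil_perturb_term; bl|nra|].
  intros n x. unfold qnil_perturb_term. rewrite oppowSr.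
  eapply Rle_trans; [apply (proj1 (Hb n (P' x)))|].
  assert (0 <= C * (/ 2) ^ n) by (apply Rmult_le_pos; [lra|apply pow_le; lra]).
  replace (C * M * (/ 2) ^ n * vnorm x) with (C * (/ 2) ^ n * (M * vnorm x)) by ring.
  apply Rmult_le_compat_l; auto.
Qed.

Section Sum.
Variable s : X -> X.
Hypotheses (Hs : BL s) (Hss : op_sums qnil_perturb_term s).

Lemma qnil_perturb_inv_l : P' ** s = P' ** P'.
Proof.
  apply (op_sums_unique (fun n => P' ** qnil_perturb_term n)); [apply op_sums_mul_l; auto|].
  apply (op_sums_single (fun n => P' ** qnil_perturb_term n)). intro n. opext. apply P'N.
Qed.
Let P's z : P' (s z) = P' (P' z) := opE qnil_perturb_inv_l z.

Lemma qnil_perturb_mul_l : P ** s = P ** P'.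
Proof.
  apply (op_sums_unique (fun n => P ** qnil_perturb_term n)); [apply op_sums_mul_l; auto|].
  apply (op_sums_single (fun n => P ** qnil_perturb_term n)). intro n. opext. apply PN.
Qed.

Let Ps z : P (s z) = P (P' z) := opE qnil_perturb_mul_l z.

Lemma qnil_perturb_annihilates_r : s ** N = op0.
Proof.
  apply (op_sums_eq0 (fun n => qnil_perturb_term n ** N)); [apply op_sums_mul_r; auto|].
  intro n. unfold qnil_perturb_term. rewrite oppowSr. opext.
  rewrite P'N, (bl_zero (bl_pow P' n HP')). apply bl_zero; bl.
Qed.

Let sN z : s (N z) = vzero := opE qnil_perturb_annihilates_r z.

Lemma qnil_perturb_mul_r : s ** P = P' ** P +++ N ** s.
Proof.
  apply (op_sums_unique (fun n => qnil_perturb_term n ** P)); [apply op_sums_mul_r; auto|].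
  apply (op_sumsSl (fun n => qnil_perturb_term n ** P)).
  apply (op_sums_ext (fun n => N ** qnil_perturb_term n)); [|apply op_sums_mul_l; auto].
  intro n. opext. unfold qnil_perturb_term.
  change ((N ^^ S n) ((P' ^^ S n) x) = (N ^^ S n) ((P' ^^ S (S n)) (P x))).
  rewrite (oppowSr P' (S n)), (oppowSr P' n). unfold opmul. rewrite <- PP', P'PP'. reflexivity.
Qed.

Lemma qnil_perturb_mul : (P +++ N) ** s = P ** P' +++ N ** s.
Proof. opext. rewrite Ps. reflexivity. Qed.

Lemma qnil_perturb_commute : s ** (P +++ N) = (P +++ N) ** s.
Proof.
  rewrite qnil_perturb_mul. opext. lin.
  rewrite (opE qnil_perturb_mul_r x : s (P x) = vadd (P' (P x)) (N (s x))), sN, PP', vadd_0.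
  reflexivity.
Qed.

Lemma qnil_perturb_inner : s ** ((P +++ N) ** s) = s.
Proof.
  change (s ** (P +++ N) ** s = s). rewrite qnil_perturb_commute, qnil_perturb_mul.
  assert (Nss : op_sums (fun n => qnil_perturb_term (S n)) (N ** s ** s)).
  { apply (op_sums_ext (fun n => N ** qnil_perturb_term n ** s)); [|apply op_sums_mul_r, op_sums_mul_l; auto].
    intro n. opext. unfold qnil_perturb_term.
    change ((N ^^ S n) ((P' ^^ S n) (s x)) = (N ^^ S n) ((P' ^^ S (S n)) x)).
    rewrite (oppowSr P' (S n)), (oppowSr P' n). unfold opmul. rewrite P's. reflexivity. }
  rewrite (op_sums_unique _ _ _ Hss (op_sumsSl _ _ Nss)) at 3.
  opext. rewrite P's, PP', P'PP'. reflexivity.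
Qed.

Let g := P --- P ** P ** P'.
Let h := N --- N ** P ** P'.

Lemma qnil_perturb_rest_eq : (P +++ N) --- (P +++ N) ** (P +++ N) ** s = (g +++ h) --- N ** (N ** s).
Proof.
  change ((P +++ N) ** (P +++ N) ** s) with ((P +++ N) ** ((P +++ N) ** s)).
  rewrite qnil_perturb_mul. opext. unfold g, h, opadd, opsub, opmul. lin. rewrite PN. vgroup.
Qed.

Lemma qnil_perturb_rest_head : qnil (g +++ h).
Proof.
  assert (Hh : BL h) by (unfold h; bl).
  apply qnilD_mul0; [unfold g; bl|auto| |apply HPP'|].
  - opext. unfold g, h, opsub, opmul. lin. rewrite !PN, !P'N. lin. vgroup.
  - apply (qnil_of_pow_factor h N N (op1 --- P ** P')); [auto|bl|auto|].
    intro k. induction k as [|k IH]; opext.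
    + cbn. unfold h, opmul, opsub, op1. lin. reflexivity.
    + change (h ((h ^^ S k) x) = N (N ((N ^^ k) ((op1 --- P ** P') x)))).
      rewrite IH. unfold h at 1. unfold opsub, opmul. cbn [oppow]. unfold opmul. rewrite P'N. lin. vgroup.
Qed.

Lemma qnil_perturb_rest : qnil ((P +++ N) --- (P +++ N) ** (P +++ N) ** s).
Proof.
  assert (Hgh : BL (g +++ h)) by (unfold g, h; bl).
  assert (ghN : forall u, (g +++ h) (N u) = N (N u)).
  { intro u. unfold g, h, opadd, opsub, opmul. rewrite !P'N, PN. lin. vgroup. }
  assert (sgh : s ** (g +++ h) = op0).
  { apply (op_sums_eq0 (fun n => qnil_perturb_term n ** (g +++ h))); [apply op_sums_mul_r; auto|].
    intro n. opext. unfold qnil_perturb_term. rewrite oppowSr. unfold g, h, opmul, opadd, opsub. lin.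
    rewrite !P'N, PP', P'PP'. lin. rewrite vadd_opp, vopp_zero, !vadd_0, (bl_zero (bl_pow P' n HP')).
    apply bl_zero; bl. }
  rewrite qnil_perturb_rest_eq. apply qnil_sub_r; [auto|bl|apply qnil_perturb_rest_head| | |].
  - apply functional_extensionality; intro x. change (N (N (s ((g +++ h) x))) = vzero).
    rewrite (opE sgh x : s ((g +++ h) x) = vzero). lin. reflexivity.
  - opext. rewrite sN. lin. reflexivity.
  - intros eps Heps. destruct (qN eps Heps) as [C [HC Hb]], (bl_bound Hs) as [Ms [HMs0 HMs]].
    exists (C * eps ^ 2 * (Ms + 1)).
    split; [apply Rmult_lt_0_compat; [apply Rmult_lt_0_compat; [auto|apply pow_lt; auto]|lra]|].
    intros k z.
    assert (Hk : forall k u, ((g +++ h) ^^ k) (N u) = (N ^^ k) (N u)).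
    { induction k0 as [|k0 IH]; intro u; [reflexivity|].
      change ((g +++ h) (((g +++ h) ^^ k0) (N u)) = N ((N ^^ k0) (N u))).
      rewrite IH, <- (opE (oppow_commute N N k0 eq_refl) u : N ((N ^^ k0) u) = (N ^^ k0) (N u)).
      apply ghN. }
    unfold opmul. rewrite Hk.
    change ((N ^^ k) (N (N (s z)))) with ((N ^^ k ** N ** N) (s z)). rewrite <- !oppowSr.
    eapply Rle_trans; [apply Hb|].
    eapply Rle_trans; [apply Rmult_le_compat_l; [apply Rmult_le_pos; [lra|apply pow_le; lra]|apply HMs]|].
    assert (hz := vnorm_nonneg z). assert (hp : 0 < eps ^ k) by (apply pow_lt; lra).
    assert (0 < eps ^ 2) by (apply pow_lt; lra).
    replace (C * eps ^ S (S k) * (Ms * vnorm z)) with (C * eps ^ 2 * Ms * (eps ^ k * vnorm z)) by (cbn; ring).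
    replace (C * eps ^ 2 * (Ms + 1) * eps ^ k * vnorm z)
      with (C * eps ^ 2 * (Ms + 1) * (eps ^ k * vnorm z)) by ring.
    apply Rmult_le_compat_r; [nra|]. apply Rmult_le_compat_l; nra.
Qed.

End Sum.

Lemma gdrazin_add_qnil : exists s, gdrazin (P +++ N) s.
Proof.
  destruct qnil_perturb_sums as [s [Hs Hss]]. exists s.
  split; [auto|split; [|split]].
  - apply qnil_perturb_inner; auto.
  - symmetry; apply qnil_perturb_commute; auto.
  - apply qnil_perturb_rest; auto.
Qed.

End GDrazinAddQnil.

(* The g-Drazin inverse of [P + Y] is [(1 - Y Y') P' + sum_n Y'^(n+1) g^n (1 - P P')], where
   [g = P - P^2 P'] is quasinilpotent. *)
Section GDrazinAddGroup.
Variables P P' Y Y' : X -> X.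
Hypotheses (HP : BL P) (HY : BL Y) (HY' : BL Y') (HPP' : gdrazin P P').
Hypotheses (G1 : Y' ** (Y ** Y') = Y') (G2 : Y ** Y' = Y' ** Y) (G3 : Y ** Y ** Y' = Y).
Hypothesis HPY : P ** Y = op0.

Let HP' : BL P' := proj1 HPP'.
Let P'PP' z : P' (P (P' z)) = P' z := opE (proj1 (proj2 HPP')) z.
Let PP' z : P (P' z) = P' (P z) := opE (proj1 (proj2 (proj2 HPP'))) z.
Let Y'YY' z : Y' (Y (Y' z)) = Y' z := opE G1 z.
Let YY' z : Y (Y' z) = Y' (Y z) := opE G2 z.
Let YYY' z : Y (Y (Y' z)) = Y z := opE G3 z.
Let PY z : P (Y z) = vzero := opE HPY z.
Let YY'Y' z : Y (Y' (Y' z)) = Y' z := eq_trans (YY' (Y' z)) (Y'YY' z).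

Let P'Y z : P' (Y z) = vzero.
Proof. rewrite <- P'PP', PP', PY. lin. reflexivity. Qed.
Let PY' z : P (Y' z) = vzero.
Proof. rewrite <- YY'Y', PY. reflexivity. Qed.
Let P'Y' z : P' (Y' z) = vzero.
Proof. rewrite <- YY'Y', P'Y. reflexivity. Qed.

Let g := P --- P ** P ** P'.
Let p := op1 --- P ** P'.
Let phi := op1 --- Y ** Y'.
Let Hg : BL g.
Proof. unfold g; bl. Qed.
Let Hp : BL p.
Proof. unfold p; bl. Qed.
Let Hphi : BL phi.
Proof. unfold phi; bl. Qed.

Let gY' z : g (Y' z) = vzero.
Proof. unfold g, opsub, opmul; rewrite PY', P'Y'; lin; vgroup. Qed.
Let gY z : g (Y z) = vzero.
Proof. unfold g, opsub, opmul; rewrite PY, P'Y; lin; vgroup. Qed.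
Let gp z : g (p z) = g z.
Proof. unfold g, p, opsub, opmul, op1; lin; rewrite P'PP'; vgroup. Qed.
Let gphi z : g (phi z) = g z.
Proof. unfold phi, opsub, opmul, op1; lin; rewrite gY; vgroup. Qed.
Let pP z : p (P z) = g (p z).
Proof. rewrite gp; unfold g, p, opsub, opmul, op1; rewrite <- PP'; reflexivity. Qed.

Definition group_perturb_term C n := Y' ^^ S n ** (g ^^ n ** C).

Lemma group_perturb_sums C : BL C -> exists S, BL S /\ op_sums (group_perturb_term C) S.
Proof.
  intro HC. destruct (bl_bound HY') as [M [HM0 HM]], (bl_bound HC) as [Mc [HMc0 HMc]].
  destruct (qnil_sandwich_geometric g Y' op1 (proj2 (proj2 (proj2 HPP'))) HY' bl_op1) as [K [HK Hb]].
  apply (op_sums_exists _ (M * K * Mc));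
    [intro n; unfold group_perturb_term; bl|apply Rmult_le_pos; [apply Rmult_le_pos|]; lra|].
  intros n x. unfold group_perturb_term, opmul. cbn [oppow]. unfold opmul.
  eapply Rle_trans; [apply HM|]. eapply Rle_trans; [apply Rmult_le_compat_l; [auto|apply (proj2 (Hb n (C x)))]|].
  assert (0 <= K * (/ 2) ^ n) by (apply Rmult_le_pos; [lra|apply pow_le; lra]).
  replace (M * K * Mc * (/ 2) ^ n * vnorm x) with (M * (K * (/ 2) ^ n * (Mc * vnorm x))) by ring.
  apply Rmult_le_compat_l; auto. apply Rmult_le_compat_l; auto.
Qed.

Lemma group_perturb_annihilated C S A : BL A -> op_sums (group_perturb_term C) S ->
  (forall z, A (Y' z) = vzero) -> A ** S = op0.
Proof.
  intros HA HS HAz. apply (op_sums_eq0 (fun n => A ** group_perturb_term C n)); [apply op_sums_mul_l; auto|].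
  intro n. opext. apply HAz.
Qed.

Lemma group_perturb_termSY C n : Y ** group_perturb_term C (S n) = group_perturb_term (g ** C) n.
Proof.
  opext. change (Y (Y' (Y' ((Y' ^^ n) ((g ^^ S n) (C x))))) = Y' ((Y' ^^ n) ((g ^^ n) (g (C x))))).
  rewrite YY'Y', (oppowSr g n). reflexivity.
Qed.

Section Sums.
Variables T W V : X -> X.
Hypotheses (HT : BL T) (HTs : op_sums (group_perturb_term p) T).
Hypotheses (HW : BL W) (HWs : op_sums (group_perturb_term (g ** p)) W).
Hypotheses (HV : BL V) (HVs : op_sums (group_perturb_term (g ** (g ** p))) V).

Let s := phi ** P' +++ T.

Let PT z : P (T z) = vzero := opE (group_perturb_annihilated p T P HP HTs PY') z.
Let P'T z : P' (T z) = vzero := opE (group_perturb_annihilated p T P' HP' HTs P'Y') z.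

Lemma group_perturb_sumSY C S R : BL C -> op_sums (group_perturb_term C) S ->
  op_sums (group_perturb_term (g ** C)) R -> Y ** S = Y ** Y' ** C +++ R.
Proof.
  intros HC HS HR.
  apply (op_sums_unique (fun n => Y ** group_perturb_term C n)); [apply op_sums_mul_l; auto|].
  apply (op_sumsSl (fun n => Y ** group_perturb_term C n)).
  apply (op_sums_ext (group_perturb_term (g ** C))); auto.
  intro n; rewrite group_perturb_termSY; reflexivity.
Qed.

Let YT z : Y (T z) = vadd (Y (Y' (p z))) (W z) := opE (group_perturb_sumSY p T W Hp HTs HWs) z.

Lemma group_perturb_TP : T ** P = W.
Proof.
  apply (op_sums_unique (fun n => group_perturb_term p n ** P)); [apply op_sums_mul_r; auto|].
  apply (op_sums_ext (group_perturb_term (g ** p))); auto. intro n. unfold group_perturb_term. opext. rewrite pP. reflexivity.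
Qed.

Lemma group_perturb_TY : T ** Y = Y' ** Y.
Proof.
  assert (pY : forall z, p (Y z) = Y z) by (intro z; unfold p, opsub, opmul, op1; rewrite P'Y; lin; vgroup).
  transitivity (group_perturb_term p 0%nat ** Y).
  - apply (op_sums_unique (fun n => group_perturb_term p n ** Y)); [apply op_sums_mul_r; auto|].
    apply (op_sums_single (fun n => group_perturb_term p n ** Y)).
    intro n. opext. change (Y' ((Y' ^^ S n) (g ((g ^^ n) (p (Y x))))) = vzero).
    rewrite pY, (opE (oppow_commute g g n eq_refl) (Y x) : g ((g ^^ n) (Y x)) = (g ^^ n) (g (Y x))).
    rewrite gY, (bl_zero (bl_pow g n Hg)), (bl_zero (bl_pow Y' (S n) HY')). apply bl_zero, HY'.
  - opext. change (Y' (p (Y x)) = Y' (Y x)). rewrite pY. reflexivity.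
Qed.

Lemma group_perturb_mul : (P +++ Y) ** s = P ** P' +++ Y ** Y' ** p +++ W.
Proof.
  opext. unfold s, phi, opadd, opsub, opmul, op1. lin. rewrite PT, YT, YYY', PY. lin. vgroup.
Qed.

Lemma group_perturb_commute : s ** (P +++ Y) = (P +++ Y) ** s.
Proof.
  rewrite group_perturb_mul. opext. unfold s, phi, p, opadd, opsub, opmul, op1. lin.
  rewrite (opE group_perturb_TP x : T (P x) = W x), (opE group_perturb_TY x : T (Y x) = Y' (Y x)), P'Y.
  lin. rewrite <- YY', <- (PP' x). vgroup.
Qed.

Lemma group_perturb_inner : s ** ((P +++ Y) ** s) = s.
Proof.
  change (s ** (P +++ Y) ** s = s). rewrite group_perturb_commute, group_perturb_mul.
  assert (Wg : W ** s = op0).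
  { assert (gs : forall z, g (p (s z)) = vzero).
    { intro z. rewrite gp. unfold g, s, phi, opadd, opsub, opmul, op1. lin.
      rewrite PT, P'T, PY, P'Y. lin. rewrite (PP' (P' z)), P'PP'. vgroup. }
    apply (op_sums_eq0 (fun n => group_perturb_term (g ** p) n ** s)); [apply op_sums_mul_r; auto|].
    intro n. unfold group_perturb_term. opext. rewrite gs, (bl_zero (bl_pow g n Hg)). apply bl_zero; bl. }
  assert (fT : Y ** Y' ** T = T).
  { apply (op_sums_unique (fun n => Y ** Y' ** group_perturb_term p n)); [apply op_sums_mul_l; [bl|auto]|].
    apply (op_sums_ext (group_perturb_term p)); auto. intro n. unfold group_perturb_term. opext. cbn [oppow]. unfold opmul.
    rewrite YY'Y'. reflexivity. }
  opext. change (vadd (vadd (P (P' (s x))) (Y (Y' (p (s x))))) (W (s x)) = s x).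
  rewrite (opE Wg x : W (s x) = vzero).
  unfold s, phi, p, opadd, opsub, opmul, op1. lin.
  rewrite P'T, P'Y, (opE fT x : Y (Y' (T x)) = T x). lin. rewrite (PP' (P' x)), P'PP', Y'YY'. vgroup.
Qed.

Lemma group_perturb_rest_eq : (P +++ Y) --- (P +++ Y) ** (P +++ Y) ** s = phi ** g --- V.
Proof.
  change ((P +++ Y) ** (P +++ Y) ** s) with ((P +++ Y) ** ((P +++ Y) ** s)).
  rewrite group_perturb_mul. opext. lin.
  rewrite (opE (group_perturb_annihilated _ W P HP HWs PY') x : P (W x) = vzero).
  rewrite (opE (group_perturb_sumSY (g ** p) W V ltac:(bl) HWs HVs) x
    : Y (W x) = vadd (Y (Y' (g (p x)))) (V x)).
  rewrite YYY', PY, gp. unfold phi, p, g, opsub, opmul, op1. lin. vgroup.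
Qed.

Lemma group_perturb_pow k : (phi ** g) ^^ S k = phi ** (g ^^ k ** g).
Proof.
  induction k as [|k IH]; [reflexivity|]. opext.
  change (phi (g (((phi ** g) ^^ S k) x)) = phi (g ((g ^^ k) (g x)))).
  rewrite IH. unfold opmul. rewrite gphi. reflexivity.
Qed.

Lemma group_perturb_Vphi : V ** phi = V.
Proof.
  apply (op_sums_unique (fun n => group_perturb_term (g ** (g ** p)) n ** phi)); [apply op_sums_mul_r; auto|].
  apply (op_sums_ext (group_perturb_term (g ** (g ** p)))); auto.
  intro n. unfold group_perturb_term. opext. rewrite !gp, gphi. reflexivity.
Qed.

Lemma group_perturb_rest : qnil ((P +++ Y) --- (P +++ Y) ** (P +++ Y) ** s).
Proof.
  assert (qg : qnil g) by apply HPP'.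
  assert (gV : forall x, g (V x) = vzero).
  { exact (opE (group_perturb_annihilated (g ** (g ** p)) V g Hg HVs gY')). }
  rewrite group_perturb_rest_eq. apply qnil_sub_l; [bl|auto| | | |].
  - apply (qnil_of_pow_factor _ phi g g); auto using group_perturb_pow.
  - opext. rewrite gV. lin. reflexivity.
  - apply (op_sums_eq0 (fun n => group_perturb_term (g ** (g ** p)) n ** V)); [apply op_sums_mul_r; auto|].
    intro n. unfold group_perturb_term. opext. rewrite gp, gV. lin.
    rewrite (bl_zero (bl_pow g n Hg)). apply bl_zero; bl.
  - intros eps Heps. destruct (qg eps Heps) as [C [HC Hb]], (bl_bound HV) as [Mv [HMv0 HMv]].
    exists ((Mv + 1) * C). split; [nra|]. intros k z.
    assert (E : V (((phi ** g) ^^ k) z) = V ((g ^^ k) z)).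
    { destruct k as [|k]; [reflexivity|]. rewrite group_perturb_pow, (oppowSr g k).
      exact (opE group_perturb_Vphi _). }
    rewrite E. eapply Rle_trans; [apply HMv|].
    eapply Rle_trans; [apply Rmult_le_compat_l; [auto|apply Hb]|].
    assert (hz := vnorm_nonneg z). assert (hp : 0 < eps ^ k) by (apply pow_lt; lra).
    assert (0 <= C * eps ^ k * vnorm z) by (apply Rmult_le_pos; nra).
    replace ((Mv + 1) * C * eps ^ k * vnorm z) with ((Mv + 1) * (C * eps ^ k * vnorm z)) by ring.
    apply Rmult_le_compat_r; auto. lra.
Qed.

End Sums.

Lemma gdrazin_add_group : exists s, gdrazin (P +++ Y) s.
Proof.
  destruct (group_perturb_sums p Hp) as [T [HT HTs]].
  destruct (group_perturb_sums (g ** p) ltac:(bl)) as [W [HW HWs]].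
  destruct (group_perturb_sums (g ** (g ** p)) ltac:(bl)) as [V [HV HVs]].
  exists (phi ** P' +++ T). split; [bl|split; [|split]].
  - apply (group_perturb_inner T W); auto.
  - symmetry; apply (group_perturb_commute T W); auto.
  - apply (group_perturb_rest T W V); auto.
Qed.

End GDrazinAddGroup.

(* Splitting [Q = (Q - Q^2 Q') + Q^2 Q'] into its quasinilpotent and group-invertible parts. *)
Lemma gdrazin_add_mul0 P P' Q Q' : BL P -> BL Q -> gdrazin P P' -> gdrazin Q Q' -> P ** Q = op0 ->
  exists s, gdrazin (P +++ Q) s.
Proof.
  intros HP HQ GP [HQ' [K1 [K2 KN]]] HPQ.
  assert (Q'QQ' : forall z, Q' (Q (Q' z)) = Q' z) by apply (opE K1).
  assert (QQ' : forall z, Q (Q' z) = Q' (Q z)) by apply (opE K2).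
  assert (QQ'Q' : forall z, Q (Q' (Q' z)) = Q' z) by (intro z; rewrite QQ', Q'QQ'; reflexivity).
  assert (PQ : forall z, P (Q z) = vzero) by apply (opE HPQ).
  set (N := Q --- Q ** Q ** Q') in KN.
  destruct (gdrazin_add_qnil P P' N HP ltac:(unfold N; bl) GP KN) as [s1 Hs1].
  { opext. unfold N, opsub, opmul. lin. rewrite !PQ. vgroup. }
  destruct (gdrazin_add_group (P +++ N) s1 (Q ** Q ** Q') Q') as [s Hs]; [unfold N; bl|bl|auto|auto| | | | |].
  - opext. rewrite QQ'Q', Q'QQ'. reflexivity.
  - opext. rewrite QQ'Q', QQ', Q'QQ'. reflexivity.
  - opext. rewrite QQ'Q', Q'QQ'. reflexivity.
  - opext. unfold N, opsub, opmul. lin. rewrite !PQ, QQ', Q'QQ'. vgroup.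
  - exists s. replace (P +++ Q) with (P +++ N +++ Q ** Q ** Q'); auto.
    opext. unfold N, opadd, opsub, opmul. vgroup.
Qed.

End GDrazin.

Ltac vanish := repeat (lin; match goal with H : forall _, _ = vzero |- _ => rewrite H end); lin.

Theorem theorem2p2 (X : CBanach) (a b : X -> X) :
  bounded_linear X a -> bounded_linear X b ->
  has_gDrazin X a -> has_gDrazin X b ->
  (forall x, a (b (a x)) = vzero) ->
  (forall x, b (a (b x)) = vzero) ->
  (forall x, a (a (b (b x))) = vzero) ->
  (forall x, a (b (b (b x))) = vzero) ->
  has_gDrazin X (opadd X a b).
Proof.
  intros Ha Hb Ga Gb aba bab aabb abbb.
  apply has_gDrazinP in Ga as [a' Ga]; auto. apply has_gDrazinP in Gb as [b' Gb]; auto.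
  set (c := a +++ b). set (u := a ** a +++ a ** b +++ b ** b).
  set (Y := b ** (a ** a) +++ b ** (b ** a)).
  assert (Hc : BL c) by (unfold c; bl). assert (Hu : BL u) by (unfold u; bl).
  assert (HY : BL Y) by (unfold Y; bl).
  assert (Gua : exists w, gdrazin (u ** a) w).
  { replace (u ** a) with (a ** (a ** a) +++ b ** (b ** a)) by (unfold u; opext; vanish; vgroup).
    apply (gdrazin_add_qnil _ (a' ** (a' ** a'))); [bl|bl|apply gdrazin_cube; auto| |].
    - apply qnil_of_sq0; [bl|]. opext. vanish. reflexivity.
    - opext. vanish. reflexivity. }
  destruct Gua as [w1 Gw1].
  destruct (gdrazin_add_qnil (a ** u) _ Y ltac:(bl) HY (gdrazin_cline u a w1 Hu Ha Gw1)) as [w2 Gw2].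
  { apply qnil_of_sq0; [bl|]. unfold Y. opext. vanish. vgroup. }
  { unfold u, Y. opext. vanish. vgroup. }
  destruct (gdrazin_add_mul0 (a ** u +++ Y) w2 (b ** (b ** b)) _ ltac:(bl) ltac:(bl) Gw2 (gdrazin_cube b b' Hb Gb))
    as [w3 Gw3].
  { unfold u, Y. opext. vanish. vgroup. }
  replace (a ** u +++ Y +++ b ** (b ** b)) with (c ** (c ** c)) in Gw3 by (unfold c, u, Y; opext; vanish; vgroup).
  apply (has_gDrazinP c Hc). exists (c ** c ** w3). apply gdrazin_of_cube; auto.
Qed.
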